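(* Let $\{a_i,\ell_i,\gamma_i\}$ be a configuration and $a\in\mathbb R^2$ a point. Then exactly one of the following holds: (i) $a$ is non-constructible from the configuration; (ii) for every choice of four points $c_1,c_2,c_3,c_4\in\mathbb R^2$ in general position, the general algorithm started from the configuration and $c_1,\dots,c_4$ constructs $a$, i.e., $a\in S_k$ for some $k$.
   Context: A configuration is a finite collection of points $a_i\in\mathbb R^2$, lines $\ell_i\subset\mathbb R^2$ and curves $\gamma_i\subset\mathbb R^2$. Given a configuration $\{a_i,\ell_i,\gamma_i\}$, call a set $\Sigma\subset\mathbb R^2$ admissible if: (1) $\Sigma$ is dense in $\mathbb R^2$; (2) every $a_i$ lies in $\Sigma$; (3) for any $b_1,b_2,b_3,b_4\in\Sigma$ with $b_1\neq b_2$, $b_3\ne b_4$, if the lines $b_1b_2$ and $b_3b_4$ are distinct and not parallel, then their intersection point lies in $\Sigma$; (4) for any distinct $b_1,b_2\in\Sigma$, every isolated intersection point of the line $b_1b_2$ with any of the lines $\ell_i$ or curves $\gamma_j$ lies in $\Sigma$. A point $a$ is non-constructible from the configuration if there exists an admissible set $\Sigma$ with $a\notin\Sigma$. Four points $c_1,\dots,c_4$ are in general position if no three of them are collinear and no two of the six lines $c_jc_k$ are parallel. The general algorithm: set $S_0=\{a_i\}\cup\{c_1,c_2,c_3,c_4\}$ and $L_0=\{\ell_i\}$; given $S_k,L_k$, let $L_{k+1}=L_k\cup\{\text{lines through two distinct points of } S_k\}$ and let $S_{k+1}$ be $S_k$ together with all intersection points of pairs of distinct non-parallel lines in $L_{k+1}$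 and all isolated intersection points of lines in $L_{k+1}$ with the curves $\gamma_j$. The algorithm constructs $a$ if $a\in S_k$ for some $k$. *)

From Stdlib Require Import Reals List.
Import ListNotations.
Open Scope R_scope.

Definition pt : Type := (R * R)%type.

Definition padd (p q : pt) : pt := (fst p + fst q, snd p + snd q).
Definition psub (p q : pt) : pt := (fst p - fst q, snd p - snd q).
Definition pscale (t : R) (p : pt) : pt := (t * fst p, t * snd p).
Definition cross (u v : pt) : R := fst u * snd v - snd u * fst v.
Definition dist2 (p q : pt) : R := (fst p - fst q)^2 + (snd p - snd q)^2.

(* A line is represented by a base point and a direction vector;
   it is a genuine line when the direction is nonzero. *)
Definition line : Type := (pt * pt)%type.
Definition is_line (l : line) : Prop := snd l <> (0, 0).
Definition on_line (l : line) (x : pt) : Prop :=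
  exists t : R, x = padd (fst l) (pscale t (snd l)).
Definition line_through (b1 b2 : pt) : line := (b1, psub b2 b1).
Definition parallel (l1 l2 : line) : Prop := cross (snd l1) (snd l2) = 0.

Definition isolated_inter (l : line) (G : pt -> Prop) (p : pt) : Prop :=
  on_line l p /\ G p /\
  exists eps : R, 0 < eps /\
    forall q : pt, on_line l q -> G q -> dist2 p q < eps ^ 2 -> q = p.

(* A configuration: finitely many points, lines and curves (curves are
   arbitrary subsets of R^2). *)
Record config : Type := Config {
  cpoints : list pt;
  clines  : list line;
  ccurves : list (pt -> Prop)
}.

Definition dense (S : pt -> Prop) : Prop :=
  forall (x : pt) (eps : R), 0 < eps -> exists y, S y /\ dist2 x y < eps ^ 2.

Definition admissible (C : config) (Sg : pt -> Prop) : Prop :=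
  dense Sg /\
  (forall a, In a (cpoints C) -> Sg a) /\
  (forall b1 b2 b3 b4 p, Sg b1 -> Sg b2 -> Sg b3 -> Sg b4 ->
     b1 <> b2 -> b3 <> b4 ->
     ~ parallel (line_through b1 b2) (line_through b3 b4) ->
     on_line (line_through b1 b2) p -> on_line (line_through b3 b4) p ->
     Sg p) /\
  (forall b1 b2 p, Sg b1 -> Sg b2 -> b1 <> b2 ->
     ((exists l, In l (clines C) /\ isolated_inter (line_through b1 b2) (on_line l) p)
      \/ (exists g, In g (ccurves C) /\ isolated_inter (line_through b1 b2) g p)) ->
     Sg p).

Definition non_constructible (C : config) (a : pt) : Prop :=
  exists Sg, admissible C Sg /\ ~ Sg a.

Definition collinear (a b c : pt) : Prop := cross (psub b a) (psub c a) = 0.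

Definition general_position (c1 c2 c3 c4 : pt) : Prop :=
  ~ collinear c1 c2 c3 /\ ~ collinear c1 c2 c4 /\
  ~ collinear c1 c3 c4 /\ ~ collinear c2 c3 c4 /\
  (* no two of the six lines c_j c_k parallel; pairs sharing a point are
     covered by non-collinearity, the remaining pairs are: *)
  ~ parallel (line_through c1 c2) (line_through c3 c4) /\
  ~ parallel (line_through c1 c3) (line_through c2 c4) /\
  ~ parallel (line_through c1 c4) (line_through c2 c3).

Fixpoint stage (C : config) (c1 c2 c3 c4 : pt) (k : nat)
  : ((pt -> Prop) * (line -> Prop))%type :=
  match k with
  | O => (fun x => In x (cpoints C) \/ x = c1 \/ x = c2 \/ x = c3 \/ x = c4,
          fun l => In l (clines C))
  | S k' =>
      let (Sk, Lk) := stage C c1 c2 c3 c4 k' in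
      let L' := fun l => Lk l \/
                 exists b1 b2, Sk b1 /\ Sk b2 /\ b1 <> b2 /\ l = line_through b1 b2 in
      (fun x => Sk x
         \/ (exists l1 l2, L' l1 /\ L' l2 /\ ~ parallel l1 l2 /\
               on_line l1 x /\ on_line l2 x)
         \/ (exists l g, L' l /\ In g (ccurves C) /\ isolated_inter l g x),
       L')
  end.

Definition algorithm_constructs (C : config) (c1 c2 c3 c4 a : pt) : Prop :=
  exists k : nat, fst (stage C c1 c2 c3 c4 k) a.

From Coquelicot Require Import Coquelicot.
From Stdlib Require Import Reals Lra Psatz List Classical.
Import ListNotations.
Open Scope R_scope.

(* If an admissible set [Sg] misses [a], then, being dense, it contains four points in
   general position (an open condition), and every stage of the algorithm started from
   them stays inside [Sg]: each line of the configuration already passes through two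
   points of [Sg], namely isolated intersections with lines through nearby points of [Sg].
   Conversely, the union of the stages satisfies every closure condition by construction,
   so the real content is its density.  A set closed under intersecting lines through its
   points and containing four points in general position is dense: in affine coordinates
   the points are [O], [e1], [e2] and [(s, t)], and a case analysis on the signs of [s],
   [t], [1 - s - t] yields a frame in which the set contains [(-a, 0)] and [(0, -b)] with
   [a b <> 1].  In such a frame, projecting the x-axis to the y-axis and back through two
   suitable points acts on the coordinate [s] of [(-1/s, 0)] as a translation, through two
   others as [s -> s/2 + g]; these maps have orbits dense in a half-line, which gives
   segments of both axes around [O], and lines through points of these segments meet
   everywhere.  Passing to the closure is harmless since intersections depend
   continuously on the points. *)

Definition meet_det (b1 b2 b3 b4 : pt) : R := cross (psub b2 b1) (psub b4 b3).

Definition meet (b1 b2 b3 b4 : pt) : pt :=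
  padd b1 (pscale (cross (psub b3 b1) (psub b4 b3) / meet_det b1 b2 b3 b4) (psub b2 b1)).

Lemma on_line_meet_l b1 b2 b3 b4 : on_line (line_through b1 b2) (meet b1 b2 b3 b4).
Proof. eexists; reflexivity. Qed.

Lemma on_line_meet_r b1 b2 b3 b4 :
  meet_det b1 b2 b3 b4 <> 0 -> on_line (line_through b3 b4) (meet b1 b2 b3 b4).
Proof.
destruct b1 as [a1 a2], b2 as [c1 c2], b3 as [e1 e2], b4 as [f1 f2].
unfold meet, meet_det, on_line, line_through, cross, padd, pscale, psub; simpl. intro HD.
exists (((e1 - a1) * (c2 - a2) - (e2 - a2) * (c1 - a1)) /
        ((c1 - a1) * (f2 - e2) - (c2 - a2) * (f1 - e1))).
f_equal; field; auto.
Qed.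

Lemma meet_unique b1 b2 b3 b4 p : meet_det b1 b2 b3 b4 <> 0 ->
  on_line (line_through b1 b2) p -> on_line (line_through b3 b4) p -> p = meet b1 b2 b3 b4.
Proof.
destruct b1 as [a1 a2], b2 as [c1 c2], b3 as [e1 e2], b4 as [f1 f2], p as [p1 p2].
unfold meet, meet_det, on_line, line_through, cross, padd, pscale, psub; simpl.
intros HD [t Ht] [s Hs]. injection Ht; injection Hs; intros G1 G2 G3 G4.
assert (Et : t * ((c1 - a1) * (f2 - e2) - (c2 - a2) * (f1 - e1)) =
              (e1 - a1) * (f2 - e2) - (e2 - a2) * (f1 - e1)).
{ transitivity ((e1 - a1) * (f2 - e2) - (e2 - a2) * (f1 - e1)
     + ((f2 - e2) * ((a1 + t * (c1 - a1)) - (e1 + s * (f1 - e1)))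
        - (f1 - e1) * ((a2 + t * (c2 - a2)) - (e2 + s * (f2 - e2))))); [ring|].
  rewrite <- G1, <- G2, G3, G4. ring. }
apply (f_equal (fun q => q / ((c1 - a1) * (f2 - e2) - (c2 - a2) * (f1 - e1)))) in Et.
replace (t * ((c1 - a1) * (f2 - e2) - (c2 - a2) * (f1 - e1)) /
         ((c1 - a1) * (f2 - e2) - (c2 - a2) * (f1 - e1))) with t in Et by (field; exact HD).
rewrite G3, G4, Et. reflexivity.
Qed.

Lemma meet_det_neq_l b1 b2 b3 b4 : meet_det b1 b2 b3 b4 <> 0 -> b1 <> b2.
Proof. intros H E; subst; apply H; unfold meet_det, cross, psub; simpl; ring. Qed.

Lemma meet_det_neq_r b1 b2 b3 b4 : meet_det b1 b2 b3 b4 <> 0 -> b3 <> b4.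
Proof. intros H E; subst; apply H; unfold meet_det, cross, psub; simpl; ring. Qed.

Section RealContinuity.
Context {T : UniformSpace}.

Lemma continuous_Rplus (f g : T -> R) z :
  continuous f z -> continuous g z -> continuous (fun y => f y + g y) z.
Proof. exact (@continuous_plus T R_AbsRing R_NormedModule f g z). Qed.

Lemma continuous_Rminus (f g : T -> R) z :
  continuous f z -> continuous g z -> continuous (fun y => f y - g y) z.
Proof. exact (@continuous_minus T R_AbsRing R_NormedModule f g z). Qed.

Lemma continuous_Rmult (f g : T -> R) z :
  continuous f z -> continuous g z -> continuous (fun y => f y * g y) z.
Proof. exact (@continuous_mult T R_AbsRing f g z). Qed.

Lemma continuous_Ropp (f : T -> R) z : continuous f z -> continuous (fun y => - f y) z.
Proof. exact (@continuous_opp T R_AbsRing R_NormedModule f z). Qed.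

Lemma continuous_Rinv_comp (f : T -> R) z :
  continuous f z -> f z <> 0 -> continuous (fun y => / f y) z.
Proof. intros. apply (continuous_comp f Rinv); auto. apply continuous_Rinv; auto. Qed.

End RealContinuity.

Lemma continuous_fst_at {U V : UniformSpace} (z : U * V) : continuous fst z.
Proof. destruct z; apply continuous_fst. Qed.

Lemma continuous_snd_at {U V : UniformSpace} (z : U * V) : continuous snd z.
Proof. destruct z; apply continuous_snd. Qed.

Lemma continuous_fst_comp {T U V : UniformSpace} (f : T -> U * V) z :
  continuous f z -> continuous (fun y => fst (f y)) z.
Proof. intro. apply (continuous_comp f fst); auto. apply continuous_fst_at. Qed.

Lemma continuous_snd_comp {T U V : UniformSpace} (f : T -> U * V) z :
  continuous f z -> continuous (fun y => snd (f y)) z.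
Proof. intro. apply (continuous_comp f snd); auto. apply continuous_snd_at. Qed.

(* The domain structure is passed explicitly: [apply] cannot infer it through
   the higher-order patterns. *)
Ltac continuity_R :=
  repeat match goal with
  | |- @continuous ?U _ (fun y => _ + _) _ => apply (@continuous_Rplus U)
  | |- @continuous ?U _ (fun y => _ - _) _ => apply (@continuous_Rminus U)
  | |- @continuous ?U _ (fun y => _ * _) _ => apply (@continuous_Rmult U)
  | |- @continuous ?U _ (fun y => - _) _ => apply (@continuous_Ropp U)
  | |- @continuous ?U _ (fun y => / _) _ => apply (@continuous_Rinv_comp U)
  | |- @continuous ?U _ (fun y => fst _) _ => apply (@continuous_fst_comp U)
  | |- @continuous ?U _ (fun y => snd _) _ => apply (@continuous_snd_comp U)
  | |- @continuous (prod_UniformSpace ?U ?V) _ fst _ => apply (@continuous_fst_at U V)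
  | |- @continuous (prod_UniformSpace ?U ?V) _ snd _ => apply (@continuous_snd_at U V)
  end.

(* Spelled out with [R * R] instead of [pt]: Coquelicot cannot see a uniform structure
   through the definition [pt]. *)
Definition quad : Type := ((R * R) * (R * R)) * ((R * R) * (R * R)).

Definition quad_det (y : quad) : R :=
  meet_det (fst (fst y)) (snd (fst y)) (fst (snd y)) (snd (snd y)).

Definition quad_meet (y : quad) : pt :=
  meet (fst (fst y)) (snd (fst y)) (fst (snd y)) (snd (snd y)).

Lemma continuous_quad_det z : continuous quad_det z.
Proof. unfold quad_det, meet_det, cross, psub; simpl. continuity_R. Qed.

Lemma continuous_quad_meet_fst z : quad_det z <> 0 -> continuous (fun y => fst (quad_meet y)) z.
Proof.
intro H. unfold quad_meet, meet, meet_det, cross, padd, pscale, psub; simpl; unfold Rdiv.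
continuity_R. exact H.
Qed.

Lemma continuous_quad_meet_snd z : quad_det z <> 0 -> continuous (fun y => snd (quad_meet y)) z.
Proof.
intro H. unfold quad_meet, meet, meet_det, cross, padd, pscale, psub; simpl; unfold Rdiv.
continuity_R. exact H.
Qed.

Definition close (d : R) (p q : pt) : Prop :=
  Rabs (fst q - fst p) < d /\ Rabs (snd q - snd p) < d.

Lemma close_mono d d' p q : d <= d' -> close d p q -> close d' p q.
Proof. unfold close; intros; lra. Qed.

Lemma close_refl d x : 0 < d -> close d x x.
Proof. intros. unfold close. rewrite !Rminus_diag_eq, Rabs_R0 by reflexivity. lra. Qed.

Lemma continuous_quad_close (f : quad -> R) (b1 b2 b3 b4 : pt) :
  continuous f ((b1, b2), (b3, b4)) -> forall e, 0 < e -> exists d, 0 < d /\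
  forall b1' b2' b3' b4', close d b1 b1' -> close d b2 b2' -> close d b3 b3' -> close d b4 b4' ->
    Rabs (f ((b1', b2'), (b3', b4')) - f ((b1, b2), (b3, b4))) < e.
Proof.
intros H e He.
destruct (proj1 (filterlim_locally f (f ((b1, b2), (b3, b4)))) H (mkposreal e He)) as [d Hd].
exists d. split; [apply cond_pos|].
intros b1' b2' b3' b4' C1 C2 C3 C4. apply (Hd ((b1', b2'), (b3', b4'))).
destruct b1, b2, b3, b4, b1', b2', b3', b4', C1, C2, C3, C4. repeat split; assumption.
Qed.

Lemma meet_continuous b1 b2 b3 b4 : meet_det b1 b2 b3 b4 <> 0 ->
  forall e, 0 < e -> exists d, 0 < d /\
  forall b1' b2' b3' b4', close d b1 b1' -> close d b2 b2' -> close d b3 b3' -> close d b4 b4' ->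
    meet_det b1' b2' b3' b4' <> 0 /\ close e (meet b1 b2 b3 b4) (meet b1' b2' b3' b4').
Proof.
intros HD e He.
destruct (continuous_quad_close _ b1 b2 b3 b4 (continuous_quad_det _) _ (Rabs_pos_lt _ HD))
  as [d1 [Hd1 K1]].
destruct (continuous_quad_close _ b1 b2 b3 b4
            (continuous_quad_meet_fst ((b1, b2), (b3, b4)) HD) e He)
  as [d2 [Hd2 K2]].
destruct (continuous_quad_close _ b1 b2 b3 b4
            (continuous_quad_meet_snd ((b1, b2), (b3, b4)) HD) e He)
  as [d3 [Hd3 K3]].
set (d := Rmin d1 (Rmin d2 d3)).
assert (m1 : d <= d1) by apply Rmin_l.
assert (m2 : d <= d2) by (eapply Rle_trans; [apply Rmin_r | apply Rmin_l]).
assert (m3 : d <= d3) by (eapply Rle_trans; [apply Rmin_r | apply Rmin_r]).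
exists d. split; [apply Rmin_pos; [|apply Rmin_pos]; assumption|].
intros b1' b2' b3' b4' C1 C2 C3 C4. split; [|split].
- intro E. specialize (K1 b1' b2' b3' b4'). unfold quad_det in K1; simpl in K1.
  rewrite E, Rminus_0_l, Rabs_Ropp in K1.
  apply (Rlt_irrefl (Rabs (meet_det b1 b2 b3 b4))), K1; eapply close_mono; eassumption.
- apply K2; eapply close_mono; eassumption.
- apply K3; eapply close_mono; eassumption.
Qed.

Lemma meet_det_stable b1 b2 b3 b4 : meet_det b1 b2 b3 b4 <> 0 -> exists d, 0 < d /\
  forall b1' b2' b3' b4', close d b1 b1' -> close d b2 b2' -> close d b3 b3' -> close d b4 b4' ->
    meet_det b1' b2' b3' b4' <> 0.
Proof.
intro HD. destruct (meet_continuous _ _ _ _ HD 1 Rlt_0_1) as [d [Hd K]].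
exists d. split; [exact Hd|]. intros. apply (K b1' b2' b3' b4'); assumption.
Qed.

Definition meet_closed (P : pt -> Prop) : Prop :=
  forall b1 b2 b3 b4 p, P b1 -> P b2 -> P b3 -> P b4 -> b1 <> b2 -> b3 <> b4 ->
    ~ parallel (line_through b1 b2) (line_through b3 b4) ->
    on_line (line_through b1 b2) p -> on_line (line_through b3 b4) p -> P p.

Lemma meet_closed_at (P : pt -> Prop) x1 y1 x2 y2 x3 y3 x4 y4 X Y t s : meet_closed P ->
  P (x1, y1) -> P (x2, y2) -> P (x3, y3) -> P (x4, y4) ->
  (x2 - x1) * (y4 - y3) - (y2 - y1) * (x4 - x3) <> 0 ->
  X = x1 + t * (x2 - x1) -> Y = y1 + t * (y2 - y1) ->
  X = x3 + s * (x4 - x3) -> Y = y3 + s * (y4 - y3) -> P (X, Y).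
Proof.
intros HM H1 H2 H3 H4 HD E1 E2 E3 E4.
apply (HM (x1, y1) (x2, y2) (x3, y3) (x4, y4)); auto.
- intro E. injection E; intros; subst. apply HD. ring.
- intro E. injection E; intros; subst. apply HD. ring.
- exists t. unfold line_through, padd, pscale, psub; simpl. rewrite E1, E2. reflexivity.
- exists s. unfold line_through, padd, pscale, psub; simpl. rewrite E3, E4. reflexivity.
Qed.

Lemma meet_closed_meet P b1 b2 b3 b4 : meet_closed P -> P b1 -> P b2 -> P b3 -> P b4 ->
  meet_det b1 b2 b3 b4 <> 0 -> P (meet b1 b2 b3 b4).
Proof.
intros HM H1 H2 H3 H4 HD. apply (HM b1 b2 b3 b4); auto.
- eapply meet_det_neq_l; eauto.
- eapply meet_det_neq_r; eauto.
- apply on_line_meet_l.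
- apply on_line_meet_r; auto.
Qed.

Definition adherent (P : pt -> Prop) (z : pt) : Prop :=
  forall e, 0 < e -> exists y, P y /\ dist2 z y < e ^ 2.

Definition closed_set (P : pt -> Prop) : Prop := forall z, adherent P z -> P z.

Lemma dist2_refl x : dist2 x x = 0.
Proof. destruct x; unfold dist2; simpl; ring. Qed.

Lemma dist2_triangle x y z : dist2 x z <= 2 * (dist2 x y + dist2 y z).
Proof.
destruct x as [x1 x2], y as [y1 y2], z as [z1 z2]; unfold dist2; simpl.
pose proof (pow2_ge_0 (x1 - 2 * y1 + z1)). pose proof (pow2_ge_0 (x2 - 2 * y2 + z2)). nra.
Qed.

Lemma close_of_dist2 z y d : 0 < d -> dist2 z y < d ^ 2 -> close d z y.
Proof.
destruct z as [z1 z2], y as [y1 y2]; unfold dist2, close; simpl; intros Hd H.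
pose proof (pow2_ge_0 (z1 - y1)). pose proof (pow2_ge_0 (z2 - y2)).
split; apply Rabs_def1; nra.
Qed.

Lemma dense_close (P : pt -> Prop) x d : dense P -> 0 < d -> exists y, P y /\ close d x y.
Proof.
intros H Hd. destruct (H x d Hd) as [y [Hy Hxy]]. exists y. split; auto.
apply close_of_dist2; auto.
Qed.

Lemma adherent_of P z : P z -> adherent P z.
Proof. intros H e He. exists z. split; auto. rewrite dist2_refl. apply pow_lt; auto. Qed.

Lemma closed_set_adherent P : closed_set (adherent P).
Proof.
intros z H e He.
destruct (H (e / 2) ltac:(lra)) as [y [Hy Hzy]].
destruct (Hy (e / 2) ltac:(lra)) as [w [Hw Hyw]].
exists w. split; auto. pose proof (dist2_triangle z y w). nra.
Qed.

(* The intersection point depends continuously on the four points. *)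
Lemma meet_closed_adherent P : meet_closed P -> meet_closed (adherent P).
Proof.
intros HM b1 b2 b3 b4 p H1 H2 H3 H4 _ _ HD L1 L2.
rewrite (meet_unique _ _ _ _ _ HD L1 L2).
intros e He.
destruct (meet_continuous b1 b2 b3 b4 HD (e / 2) ltac:(lra)) as [d [Hd Hc]].
destruct (H1 d Hd) as [b1' [P1 D1]], (H2 d Hd) as [b2' [P2 D2]],
         (H3 d Hd) as [b3' [P3 D3]], (H4 d Hd) as [b4' [P4 D4]].
destruct (Hc b1' b2' b3' b4') as [HD' [E1 E2]]; try (apply close_of_dist2; assumption).
exists (meet b1' b2' b3' b4'). split; [apply meet_closed_meet; auto|].
destruct (meet b1' b2' b3' b4') as [m1 m2], (meet b1 b2 b3 b4) as [n1 n2].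
unfold dist2; simpl in *. apply Rabs_def2 in E1. apply Rabs_def2 in E2. nra.
Qed.

Definition affine (W u v z : pt) : pt :=
  (fst W + fst z * fst u + snd z * fst v, snd W + fst z * snd u + snd z * snd v).

Lemma meet_closed_affine P W u v : meet_closed P -> cross u v <> 0 ->
  meet_closed (fun z => P (affine W u v z)).
Proof.
intros HM Huv b1 b2 b3 b4 p H1 H2 H3 H4 _ _ NP [t Ht] [s Hs].
destruct W as [w1 w2], u as [u1 u2], v as [v1 v2].
destruct b1 as [a1 a2], b2 as [c1 c2], b3 as [e1 e2], b4 as [f1 f2], p as [p1 p2].
unfold affine in *; unfold cross in Huv; simpl in *.
unfold parallel, line_through, cross, psub in NP; simpl in NP.
unfold line_through, padd, pscale, psub in Ht, Hs; simpl in Ht, Hs.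
injection Ht; injection Hs; intros G1 G2 G3 G4.
apply (meet_closed_at P _ _ _ _ _ _ _ _ _ _ t s HM H1 H2 H3 H4).
- intro E. apply NP.
  assert (E2 : ((c1 - a1) * (f2 - e2) - (c2 - a2) * (f1 - e1)) * (u1 * v2 - u2 * v1) = 0)
    by (rewrite <- E; ring).
  apply Rmult_integral in E2. destruct E2; [auto | contradiction].
- rewrite G4, G3; ring.
- rewrite G4, G3; ring.
- rewrite G2, G1; ring.
- rewrite G2, G1; ring.
Qed.

(* An affine bijection is Lipschitz with constant [sqrt K]. *)
Lemma dense_of_affine P W u v : cross u v <> 0 ->
  dense (fun z => P (affine W u v z)) -> dense P.
Proof.
intros Huv H x e He.
destruct W as [w1 w2], u as [u1 u2], v as [v1 v2], x as [x1 x2].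
unfold cross in Huv; simpl in Huv.
set (K := 1 + 2 * (u1 ^ 2 + u2 ^ 2 + v1 ^ 2 + v2 ^ 2)).
assert (HK : 1 <= K) by (unfold K; nra).
set (z := (((x1 - w1) * v2 - (x2 - w2) * v1) / (u1 * v2 - u2 * v1),
           (u1 * (x2 - w2) - u2 * (x1 - w1)) / (u1 * v2 - u2 * v1))).
assert (Ez : affine (w1, w2) (u1, u2) (v1, v2) z = (x1, x2))
  by (unfold affine, z; simpl; f_equal; field; auto).
destruct (H z (e / K) ltac:(apply Rdiv_lt_0_compat; lra)) as [y [Py Dy]].
exists (affine (w1, w2) (u1, u2) (v1, v2) y). split; auto.
rewrite <- Ez.
destruct z as [z1 z2], y as [y1 y2]. unfold affine, dist2 in *; cbn [fst snd] in *.
set (d1 := z1 - y1) in *. set (d2 := z2 - y2) in *.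
replace ((w1 + z1 * u1 + z2 * v1 - (w1 + y1 * u1 + y2 * v1)) ^ 2 +
         (w2 + z1 * u2 + z2 * v2 - (w2 + y1 * u2 + y2 * v2)) ^ 2)
  with ((d1 * u1 + d2 * v1) ^ 2 + (d1 * u2 + d2 * v2) ^ 2) by (unfold d1, d2; ring).
assert (B : (d1 * u1 + d2 * v1) ^ 2 + (d1 * u2 + d2 * v2) ^ 2 <= K * (d1 ^ 2 + d2 ^ 2)).
{ unfold K. pose proof (pow2_ge_0 (d1 * u1 - d2 * v1)). pose proof (pow2_ge_0 (d1 * u2 - d2 * v2)).
  pose proof (pow2_ge_0 (d1 * v1)). pose proof (pow2_ge_0 (d2 * u1)).
  pose proof (pow2_ge_0 (d1 * v2)). pose proof (pow2_ge_0 (d2 * u2)). nra. }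
assert (B2 : K * (d1 ^ 2 + d2 ^ 2) < K * (e / K) ^ 2) by (apply Rmult_lt_compat_l; lra).
assert (B3 : K * (e / K) ^ 2 <= e ^ 2).
{ replace (K * (e / K) ^ 2) with (e ^ 2 / K) by (field; lra).
  apply Rmult_le_reg_r with K; [lra|]. unfold Rdiv. rewrite Rmult_assoc, Rinv_l by lra.
  pose proof (pow2_ge_0 e). nra. }
lra.
Qed.

Lemma nat_floor_mult c y : 0 < c -> 0 <= y -> exists j : nat, INR j * c <= y < INR j * c + c.
Proof.
intros Hc Hy. destruct (INR_archimed c y Hc) as [n Hn].
revert y Hy Hn. induction n as [|n IH]; intros y Hy Hn.
- simpl in Hn. lra.
- rewrite S_INR in Hn. destruct (Rlt_or_le y (INR n * c)) as [H|H].
  + apply IH; lra.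
  + exists n. lra.
Qed.

Lemma interval_cover u c w : 0 < c -> c <= w -> forall (m : nat) x, u <= x <= u + INR m * c + w ->
  exists j : nat, (j <= m)%nat /\ u + INR j * c <= x <= u + INR j * c + w.
Proof.
intros Hc Hw m. induction m as [|m IH]; intros x Hx.
- exists 0%nat. simpl in *. split; [lia|lra].
- rewrite S_INR in Hx. destruct (Rle_or_lt x (u + INR m * c + w)) as [H|H].
  + destruct (IH x ltac:(lra)) as [j [Hj1 Hj2]]. exists j. split; [lia|lra].
  + exists (S m). rewrite S_INR. split; [lia|lra].
Qed.

Section ShiftContraction.

Variables (Sg : R -> Prop) (c r g : R).
Hypotheses (Hc : 0 < c) (Hr : 0 < r < 1).
Hypothesis shift_closed : forall s, Sg s -> Sg (s + c).
Hypothesis contraction_closed : forall s, Sg s -> Sg (r * s + g).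

Lemma shift_iter_closed (k : nat) s : Sg s -> Sg (s + INR k * c).
Proof.
revert s. induction k as [|k IH]; intros s Hs.
- simpl. replace (s + 0 * c) with s by ring. auto.
- rewrite S_INR. replace (s + (INR k + 1) * c) with ((s + INR k * c) + c) by ring. auto.
Qed.

Lemma shift_hits_window s0 u L : Sg s0 -> s0 <= u -> c <= L ->
  exists s, Sg s /\ u <= s <= u + L.
Proof.
intros H0 Hu HL. destruct (nat_floor_mult c (u - s0) Hc ltac:(lra)) as [j Hj].
exists (s0 + INR (S j) * c). split; [apply shift_iter_closed; auto|]. rewrite S_INR. lra.
Qed.

(* The images of the window [u, u + L] under [s -> r s + g + (k0 + j) c], [j <= N],
   cover it, and each of them contracts distances by [r]. *)
Lemma window_approx u L (N k0 : nat) :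
  c <= r * L -> L = INR N * c + r * L -> r * u + g + INR k0 * c = u ->
  (exists s, Sg s /\ u <= s <= u + L) ->
  forall (n : nat) x, u <= x <= u + L ->
    exists s, Sg s /\ u <= s <= u + L /\ Rabs (s - x) <= r ^ n * L.
Proof.
intros HrL HL Hfix [s0 [Hs0 Hs0u]] n. induction n as [|n IH]; intros x Hx.
- exists s0. split; [auto|split; [lra|]]. simpl. apply Rabs_le. lra.
- destruct (interval_cover u c (r * L) Hc HrL N x ltac:(lra)) as [j [Hj1 Hj2]].
  set (q := (x - u - INR j * c) / r).
  assert (Hq : r * q = x - u - INR j * c) by (unfold q; field; lra).
  destruct (IH (u + q) ltac:(nra)) as [s' [Hs'1 [Hs'2 Hs'3]]].
  exists (r * s' + g + INR (k0 + j) * c). rewrite plus_INR.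
  assert (INR j <= INR N) by (apply le_INR; auto).
  assert (0 <= INR j) by apply pos_INR.
  split; [|split].
  + rewrite <- plus_INR. apply shift_iter_closed; auto.
  + nra.
  + replace (r * s' + g + (INR k0 + INR j) * c - x) with (r * (s' - (u + q))) by lra.
    rewrite Rabs_mult, Rabs_right by lra. simpl. nra.
Qed.

Lemma orbit_dense_half_line s0 : Sg s0 ->
  exists u, s0 <= u /\ forall x, u <= x -> forall e, 0 < e -> exists s, Sg s /\ Rabs (s - x) < e.
Proof.
intro H0.
destruct (INR_archimed r (1 - r) ltac:(lra)) as [N HN].
set (L := INR N * c / (1 - r)).
assert (HL : L = INR N * c + r * L) by (unfold L; field; lra).
assert (HrL : c <= r * L).
{ unfold L. apply Rmult_le_reg_r with (1 - r); [lra|].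
  replace (r * (INR N * c / (1 - r)) * (1 - r)) with ((INR N * r) * c) by (field; lra). nra. }
destruct (INR_archimed c (s0 * (1 - r) - g) Hc) as [k0 Hk0].
set (u := (g + INR k0 * c) / (1 - r)).
assert (Hu : s0 <= u).
{ unfold u. apply Rmult_le_reg_r with (1 - r); [lra|]. unfold Rdiv.
  rewrite Rmult_assoc, Rinv_l by lra. lra. }
assert (Hfix : r * u + g + INR k0 * c = u) by (unfold u; field; lra).
assert (Win := window_approx u L N k0 HrL HL Hfix (shift_hits_window s0 u L H0 Hu ltac:(nra))).
exists u. split; auto. intros x Hx e He.
destruct (pow_lt_1_zero r ltac:(rewrite Rabs_right; lra) (e / L)
            ltac:(apply Rdiv_lt_0_compat; nra)) as [n Hn].
specialize (Hn n (le_n n)). rewrite Rabs_right in Hn by (apply Rle_ge, pow_le; lra).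
destruct (nat_floor_mult c (x - u) Hc ltac:(lra)) as [j Hj].
destruct (Win n (x - INR j * c) ltac:(nra)) as [s [Hs1 [_ Hs3]]].
exists (s + INR j * c). split; [apply shift_iter_closed; auto|].
replace (s + INR j * c - x) with (s - (x - INR j * c)) by ring.
assert (r ^ n * L < e).
{ apply Rmult_lt_reg_r with (/ L); [apply Rinv_0_lt_compat; nra|].
  rewrite Rmult_assoc, Rinv_r by nra. lra. }
lra.
Qed.

End ShiftContraction.

Lemma Rinv_close x e : 0 < x -> 0 < e -> exists d, 0 < d /\
  forall s, Rabs (s - x) < d -> 0 < s /\ Rabs (/ s - / x) < e.
Proof.
intros Hx He.
assert (Hexx : 0 < e * x * x) by (apply Rmult_lt_0_compat; [apply Rmult_lt_0_compat|]; lra).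
exists (Rmin (x / 2) (e * x * x / 2)). split; [apply Rmin_pos; lra|].
intros s Hs.
pose proof (Rmin_l (x / 2) (e * x * x / 2)). pose proof (Rmin_r (x / 2) (e * x * x / 2)).
apply Rabs_def2 in Hs. assert (Hs0 : x / 2 < s) by lra. split; [lra|].
replace (/ s - / x) with ((x - s) / (s * x)) by (field; lra).
unfold Rdiv. rewrite Rabs_mult, Rabs_inv, (Rabs_right (s * x)) by nra.
apply Rmult_lt_reg_r with (s * x); [nra|]. rewrite Rmult_assoc, Rinv_l, Rmult_1_r by nra.
assert (e * x * x / 2 < e * (s * x)).
{ replace (e * x * x / 2) with (e * (x / 2 * x)) by field.
  apply Rmult_lt_compat_l; [lra|]. nra. }
apply Rabs_def1; lra.
Qed.

Section FrameClosed.

Variable A : pt -> Prop.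
Hypotheses (A_meet : meet_closed A) (A_closed : closed_set A).
Hypotheses (A_O : A (0, 0)) (A_e1 : A (1, 0)) (A_e2 : A (0, 1)).

Lemma meet_y_axis p1 p2 x : A (p1, p2) -> A (x, 0) -> x <> p1 -> A (0, p2 * x / (x - p1)).
Proof.
intros HP Hx Hne.
apply (meet_closed_at A p1 p2 x 0 0 0 0 1 _ _ (- p1 / (x - p1)) (p2 * x / (x - p1))
         A_meet HP Hx A_O A_e2).
- intro E. apply Hne. lra.
- field. lra.
- field. lra.
- ring.
- ring.
Qed.

Lemma meet_x_axis q1 q2 y : A (q1, q2) -> A (0, y) -> y <> q2 -> A (q1 * y / (y - q2), 0).
Proof.
intros HQ Hy Hne.
apply (meet_closed_at A q1 q2 0 y 0 0 1 0 _ _ (- q2 / (y - q2)) (q1 * y / (y - q2))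
         A_meet HQ Hy A_O A_e1).
- intro E. apply Hne. lra.
- field. lra.
- field. lra.
- ring.
- ring.
Qed.

(* Projecting the x-axis to the y-axis from [p] and back from [q] is a Moebius
   map; in the coordinate [s] of the point [(-1/s, 0)] it becomes affine. *)
Lemma neg_x_axis_step p1 p2 q1 q2 s : A (p1, p2) -> A (q1, q2) ->
  0 < p1 -> q1 < 0 -> p2 * q2 < 0 -> 0 < s -> A (- / s, 0) ->
  0 < q2 * p1 / (q1 * p2) * s + (q2 - p2) / (q1 * p2) /\
  A (- / (q2 * p1 / (q1 * p2) * s + (q2 - p2) / (q1 * p2)), 0).
Proof.
intros HP HQ Hp1 Hq1 Hpq Hs Hx.
assert (Hp2 : p2 <> 0) by (intro E; subst; lra).
assert (Hq2 : q2 <> 0) by (intro E; subst; lra).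
assert (Hx1 : - / s <> p1) by (assert (0 < / s) by (apply Rinv_0_lt_compat; lra); lra).
pose proof (meet_y_axis p1 p2 (- / s) HP Hx Hx1) as Hy.
replace (p2 * - / s / (- / s - p1)) with (p2 / (1 + p1 * s)) in Hy by (field; split; nra).
assert (Hy2 : p2 / (1 + p1 * s) <> q2).
{ intro E. assert (0 < p2 * (p2 / (1 + p1 * s))).
  { replace (p2 * (p2 / (1 + p1 * s))) with (p2 * p2 / (1 + p1 * s)) by (field; nra).
    apply Rdiv_lt_0_compat; nra. }
  rewrite E in H. lra. }
pose proof (meet_x_axis q1 q2 _ HQ Hy Hy2) as Hh.
set (D := q2 * (1 + p1 * s) - p2).
assert (HD : D * p2 < 0).
{ unfold D. assert (0 < 1 + p1 * s) by nra.
  assert (p2 * q2 * (1 + p1 * s) < 0) by (apply Rmult_neg_pos; auto). nra. }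
assert (HD0 : D <> 0) by (intro E; rewrite E in HD; lra).
replace (q2 * p1 / (q1 * p2) * s + (q2 - p2) / (q1 * p2)) with (D / (q1 * p2))
  by (unfold D; field; lra).
split.
- replace (D / (q1 * p2)) with ((D * p2) / (q1 * (p2 * p2))) by (field; lra).
  apply Rdiv_neg_neg; auto. assert (0 < p2 * p2) by nra. nra.
- replace (- / (D / (q1 * p2))) with (q1 * (p2 / (1 + p1 * s)) / (p2 / (1 + p1 * s) - q2)); auto.
  unfold D. field. repeat split; try lra; try nra.
  + intro E. apply HD0. unfold D. nra.
  + intro E. apply HD0. unfold D. lra.
Qed.

Lemma pos_x_axis_step p1 p2 q1 q2 s : A (p1, p2) -> A (q1, q2) ->
  p1 < 0 -> 0 < q1 -> p2 * q2 < 0 -> 0 < s -> A (/ s, 0) ->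
  A (/ (q2 * p1 / (q1 * p2) * s + (p2 - q2) / (q1 * p2)), 0).
Proof.
intros HP HQ Hp1 Hq1 Hpq Hs Hx.
assert (Hp2 : p2 <> 0) by (intro E; subst; lra).
assert (Hq2 : q2 <> 0) by (intro E; subst; lra).
assert (Hx1 : / s <> p1) by (assert (0 < / s) by (apply Rinv_0_lt_compat; lra); lra).
pose proof (meet_y_axis p1 p2 (/ s) HP Hx Hx1) as Hy.
replace (p2 * / s / (/ s - p1)) with (p2 / (1 - p1 * s)) in Hy by (field; split; nra).
assert (Hy2 : p2 / (1 - p1 * s) <> q2).
{ intro E. assert (0 < p2 * (p2 / (1 - p1 * s))).
  { replace (p2 * (p2 / (1 - p1 * s))) with (p2 * p2 / (1 - p1 * s)) by (field; nra).
    apply Rdiv_lt_0_compat; nra. }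
  rewrite E in H. lra. }
pose proof (meet_x_axis q1 q2 _ HQ Hy Hy2) as Hh.
set (D := p2 - q2 * (1 - p1 * s)).
assert (HD : 0 < D * p2).
{ unfold D. assert (0 < 1 - p1 * s) by nra.
  assert (p2 * q2 * (1 - p1 * s) < 0) by (apply Rmult_neg_pos; auto). nra. }
assert (HD0 : D <> 0) by (intro E; rewrite E in HD; lra).
replace (q2 * p1 / (q1 * p2) * s + (p2 - q2) / (q1 * p2)) with (D / (q1 * p2))
  by (unfold D; field; lra).
replace (/ (D / (q1 * p2))) with (q1 * (p2 / (1 - p1 * s)) / (p2 / (1 - p1 * s) - q2)); auto.
unfold D. field. repeat split; try lra; try nra.
all: intro E; apply HD0; unfold D; nra.
Qed.

(* For [q] on the line through [O] and [p] the Moebius maps above are translations. *)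
Lemma x_axis_translation p1 p2 la : A (p1, p2) -> A (la * p1, la * p2) ->
  0 < p1 -> 0 < p2 -> la < 0 -> exists c, 0 < c /\
  (forall s, 0 < s -> A (- / s, 0) -> A (- / (s + c), 0)) /\
  (forall s, 0 < s -> A (/ s, 0) -> A (/ (s + c), 0)).
Proof.
intros HP HQ Hp1 Hp2 Hla.
assert (Hpq : p2 * (la * p2) < 0) by (assert (0 < p2 * p2) by nra; nra).
assert (Hla1 : la * p1 < 0) by nra.
exists ((la - 1) / (la * p1)). split; [|split].
- apply Rdiv_neg_neg; nra.
- intros s Hs Hx.
  destruct (neg_x_axis_step p1 p2 (la * p1) (la * p2) s HP HQ Hp1 Hla1 Hpq Hs Hx)
    as [_ K].
  replace (la * p2 * p1 / (la * p1 * p2) * s + (la * p2 - p2) / (la * p1 * p2))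
    with (s + (la - 1) / (la * p1)) in K by (field; lra). exact K.
- intros s Hs Hx.
  pose proof (pos_x_axis_step (la * p1) (la * p2) p1 p2 s HQ HP Hla1 Hp1 ltac:(lra) Hs Hx)
    as K.
  replace (p2 * (la * p1) / (p1 * (la * p2)) * s + (la * p2 - p2) / (p1 * (la * p2)))
    with (s + (la - 1) / (la * p1)) in K by (field; lra). exact K.
Qed.

Lemma opposite_quadrant_points a b : A (- a, 0) -> A (0, - b) -> 0 < a -> 0 < b -> a * b <> 1 ->
  exists p1 p2 la, 0 < p1 /\ 0 < p2 /\ la < 0 /\ A (p1, p2) /\ A (la * p1, la * p2).
Proof.
intros Ha' Hb' Ha Hb Hab.
set (k := a * (1 + b)). set (m := b * (1 + a)).
assert (Hk : 0 < k) by (unfold k; nra). assert (Hm : 0 < m) by (unfold m; nra).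
assert (Hab' : 1 - a * b <> 0) by lra.
assert (HZ : A (- k / (1 - a * b), - m / (1 - a * b))).
{ apply (meet_closed_at A 1 0 0 (- b) 0 1 (- a) 0 _ _
           ((1 + a) / (1 - a * b)) ((1 + b) / (1 - a * b))
           A_meet A_e1 Hb' A_e2 Ha');
    [ replace ((0 - 1) * (0 - 1) - (- b - 0) * (- a - 0)) with (1 - a * b) by ring; auto
    | unfold k, m; field; auto .. ]. }
set (p1 := k / (k + m)). set (p2 := m / (k + m)). set (la := - (k + m) / (2 + a + b)).
exists p1, p2, la. split; [|split; [|split; [|split]]].
- unfold p1; apply Rdiv_lt_0_compat; lra.
- unfold p2; apply Rdiv_lt_0_compat; lra.
- unfold la, Rdiv. rewrite Ropp_mult_distr_l_reverse.
  apply Ropp_lt_gt_0_contravar, Rdiv_lt_0_compat; lra.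
- apply (meet_closed_at A 0 0 (- k / (1 - a * b)) (- m / (1 - a * b)) 1 0 0 1 _ _
           (- (1 - a * b) / (k + m)) (m / (k + m)) A_meet A_O HZ A_e1 A_e2);
    [| unfold p1, p2; field; lra .. ].
  replace ((- k / (1 - a * b) - 0) * (1 - 0) - (- m / (1 - a * b) - 0) * (0 - 1))
    with (- (k + m) / (1 - a * b)) by (field; auto).
  unfold Rdiv. intro E. apply Rmult_integral in E. destruct E as [E|E]; [lra|].
  apply Rinv_neq_0_compat in E; auto.
- apply (meet_closed_at A 0 0 (- k / (1 - a * b)) (- m / (1 - a * b)) (- a) 0 0 (- b) _ _
           ((1 - a * b) / (2 + a + b)) ((1 + a) / (2 + a + b)) A_meet A_O HZ Ha' Hb');
    [| unfold la, p1, p2, k, m; field; repeat split; nra .. ].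
  replace ((- k / (1 - a * b) - 0) * (- b - 0) - (- m / (1 - a * b) - 0) * (0 - - a))
    with (a * b * (2 + a + b) / (1 - a * b)) by (unfold k, m; field; auto).
  unfold Rdiv. intro E. apply Rmult_integral in E. destruct E as [E|E].
  + assert (0 < a * b * (2 + a + b)) by (apply Rmult_lt_0_compat; nra). lra.
  + apply Rinv_neq_0_compat in E; auto.
Qed.

Lemma fourth_quadrant_point b x : A (0, - b) -> A (x, 0) -> 0 < b -> 0 < x ->
  A (x * (b + 1) / (b * x + 1), b * (x - 1) / (b * x + 1)).
Proof.
intros Hb' Hx Hb Hx0.
apply (meet_closed_at A 0 1 x 0 1 0 0 (- b) _ _ ((b + 1) / (b * x + 1)) ((1 - x) / (b * x + 1))
         A_meet A_e2 Hx A_e1 Hb'); [| field; nra .. ].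
replace ((x - 0) * (- b - 0) - (0 - 1) * (0 - 1)) with (- (b * x + 1)) by ring. nra.
Qed.

Lemma second_quadrant_point a b x : A (- a, 0) -> A (0, - b) -> A (x, 0) ->
  0 < a -> 0 < b -> x < 0 ->
  A (x * a * (1 + b) / (a * b - x), b * (x + a) / (a * b - x)).
Proof.
intros Ha' Hb' Hx Ha Hb Hx0. assert (Habx : 0 < a * b - x) by nra.
apply (meet_closed_at A 0 (- b) x 0 0 1 (- a) 0 _ _
         (a * (1 + b) / (a * b - x)) (- x * (1 + b) / (a * b - x)) A_meet Hb' Hx A_e2 Ha');
  [| field; lra .. ].
replace ((x - 0) * (0 - 1) - (0 - - b) * (- a - 0)) with (a * b - x) by ring. lra.
Qed.

(* The points [1 / (1 + 2 c)] and [-a / (1 + a c)] of the x-axis, reached by translations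
   from [1] and [-a], are chosen so that the step through [r] and [q] halves [s]. *)
Lemma half_ratio_points a b c : A (- a, 0) -> A (0, - b) -> 0 < a -> 0 < b -> 0 < c ->
  (forall s, 0 < s -> A (- / s, 0) -> A (- / (s + c), 0)) ->
  (forall s, 0 < s -> A (/ s, 0) -> A (/ (s + c), 0)) ->
  exists r1 r2 q1 q2, 0 < r1 /\ r2 < 0 /\ q1 < 0 /\ 0 < q2 /\ A (r1, r2) /\ A (q1, q2) /\
    q2 * r1 / (q1 * r2) = 1 / 2.
Proof.
intros Ha' Hb' Ha Hb Hc Tneg Tpos.
set (x := / (1 + 2 * c)). set (xp := - (a / (1 + a * c))).
assert (Hx0 : 0 < x) by (unfold x; apply Rinv_0_lt_compat; lra).
assert (Hx1 : x < 1) by (unfold x; rewrite <- Rinv_1; apply Rinv_lt_contravar; lra).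
assert (Hxp0 : xp < 0)
  by (unfold xp; assert (0 < a / (1 + a * c)) by (apply Rdiv_lt_0_compat; nra); lra).
assert (Hxpa : - a < xp).
{ unfold xp. assert (a / (1 + a * c) < a); [|lra].
  apply Rmult_lt_reg_r with (1 + a * c); [nra|]. unfold Rdiv.
  rewrite Rmult_assoc, Rinv_l by nra.
  assert (0 < a * a * c) by (apply Rmult_lt_0_compat; [apply Rmult_lt_0_compat|]; lra). nra. }
assert (Hx : A (x, 0)).
{ unfold x. replace (1 + 2 * c) with ((1 + c) + c) by ring.
  apply Tpos; [lra|]. apply Tpos; [lra|]. rewrite Rinv_1. exact A_e1. }
assert (Hxp : A (xp, 0)).
{ replace xp with (- / (/ a + c)) by (unfold xp; field; split; nra).
  apply Tneg; [apply Rinv_0_lt_compat; lra|]. rewrite Rinv_inv. exact Ha'. }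
exists (x * (b + 1) / (b * x + 1)), (b * (x - 1) / (b * x + 1)),
       (xp * a * (1 + b) / (a * b - xp)), (b * (xp + a) / (a * b - xp)).
split; [|split; [|split; [|split; [|split; [|split]]]]].
- apply Rdiv_lt_0_compat; nra.
- apply Rdiv_neg_pos; nra.
- apply Rdiv_neg_pos; [|nra]. assert (0 < a * (1 + b)) by nra. nra.
- apply Rdiv_lt_0_compat; nra.
- apply fourth_quadrant_point; auto.
- apply second_quadrant_point; auto.
- unfold x, xp. assert (0 < a * b * (1 + a * c)) by (apply Rmult_lt_0_compat; nra).
  field. repeat split; nra.
Qed.

Lemma neg_x_segment u : 0 < u ->
  (forall x, u <= x -> forall e, 0 < e -> exists s, (0 < s /\ A (- / s, 0)) /\ Rabs (s - x) < e) ->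
  forall a, - / u <= a < 0 -> A (a, 0).
Proof.
intros Hu H a Ha. apply A_closed. intros e He.
assert (Hx0 : 0 < - / a) by (rewrite <- Rinv_opp; apply Rinv_0_lt_compat; lra).
assert (Hxu : u <= - / a).
{ rewrite <- Rinv_opp, <- (Rinv_inv u). apply Rinv_le_contravar; lra. }
destruct (Rinv_close (- / a) e Hx0 He) as [d [Hd Hd2]].
destruct (H (- / a) Hxu d Hd) as [s [[Hs0 Hs] Hsx]].
exists (- / s, 0). split; auto.
destruct (Hd2 s Hsx) as [_ Hr]. rewrite Rinv_opp, Rinv_inv in Hr.
unfold dist2; cbn [fst snd]. apply Rabs_def2 in Hr. nra.
Qed.

Lemma pos_y_segment p1 p2 al : A (p1, p2) -> 0 < p1 -> 0 < p2 -> 0 < al ->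
  (forall a, - al <= a < 0 -> A (a, 0)) -> exists be, 0 < be /\ forall y, 0 < y <= be -> A (0, y).
Proof.
intros HP Hp1 Hp2 Hal Hseg.
assert (Hb : 0 < al * p2 / (2 * p1)) by (apply Rdiv_lt_0_compat; nra).
exists (Rmin (p2 / 2) (al * p2 / (2 * p1))). split; [apply Rmin_pos; lra|].
intros y Hy.
pose proof (Rmin_l (p2 / 2) (al * p2 / (2 * p1))).
pose proof (Rmin_r (p2 / 2) (al * p2 / (2 * p1))).
set (a := p1 * y / (y - p2)).
assert (Ea : a = - (p1 * y / (p2 - y))) by (unfold a; field; lra).
assert (Ha0 : a < 0)
  by (rewrite Ea; assert (0 < p1 * y / (p2 - y)) by (apply Rdiv_lt_0_compat; nra); lra).
assert (Ha1 : - al <= a).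
{ rewrite Ea. assert (p1 * y / (p2 - y) <= al); [|lra].
  apply Rmult_le_reg_r with (p2 - y); [lra|].
  unfold Rdiv. rewrite Rmult_assoc, Rinv_l, Rmult_1_r by lra.
  assert (p1 * y <= al * p2 / 2).
  { apply Rmult_le_reg_r with (/ p1); [apply Rinv_0_lt_compat; lra|].
    replace (p1 * y * / p1) with y by (field; lra).
    replace (al * p2 / 2 * / p1) with (al * p2 / (2 * p1)) by (field; lra). lra. }
  nra. }
pose proof (meet_y_axis p1 p2 a HP (Hseg a (conj Ha1 Ha0)) ltac:(lra)) as K.
replace (p2 * a / (a - p1)) with y in K; auto.
unfold a. field. split; [lra|]. intro E. assert (p1 * p2 = 0) by nra. nra.
Qed.

Lemma neg_y_segment p1 p2 al : A (p1, p2) -> 0 < p1 -> p2 < 0 -> 0 < al ->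
  (forall a, - al <= a < 0 -> A (a, 0)) -> exists be, 0 < be /\ forall y, - be <= y < 0 -> A (0, y).
Proof.
intros HP Hp1 Hp2 Hal Hseg.
assert (Hb : 0 < al * (- p2) / (2 * p1)) by (apply Rdiv_lt_0_compat; nra).
exists (Rmin (- p2 / 2) (al * (- p2) / (2 * p1))). split; [apply Rmin_pos; lra|].
intros y Hy.
pose proof (Rmin_l (- p2 / 2) (al * (- p2) / (2 * p1))).
pose proof (Rmin_r (- p2 / 2) (al * (- p2) / (2 * p1))).
set (a := p1 * y / (y - p2)).
assert (Ea : a = - (p1 * (- y) / (y - p2))) by (unfold a; field; lra).
assert (Ha0 : a < 0)
  by (rewrite Ea; assert (0 < p1 * (- y) / (y - p2)) by (apply Rdiv_lt_0_compat; nra); lra).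
assert (Ha1 : - al <= a).
{ rewrite Ea. assert (p1 * (- y) / (y - p2) <= al); [|lra].
  apply Rmult_le_reg_r with (y - p2); [lra|].
  unfold Rdiv. rewrite Rmult_assoc, Rinv_l, Rmult_1_r by lra.
  assert (p1 * (- y) <= al * (- p2) / 2).
  { apply Rmult_le_reg_r with (/ p1); [apply Rinv_0_lt_compat; lra|].
    replace (p1 * (- y) * / p1) with (- y) by (field; lra).
    replace (al * (- p2) / 2 * / p1) with (al * (- p2) / (2 * p1)) by (field; lra). lra. }
  nra. }
pose proof (meet_y_axis p1 p2 a HP (Hseg a (conj Ha1 Ha0)) ltac:(lra)) as K.
replace (p2 * a / (a - p1)) with y in K; auto.
unfold a. field. split; [lra|]. intro E. assert (p1 * p2 = 0) by nra. nra.
Qed.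

Lemma pos_x_segment q1 q2 be : A (q1, q2) -> 0 < q1 -> q2 < 0 -> 0 < be ->
  (forall y, 0 < y <= be -> A (0, y)) -> exists ga, 0 < ga /\ forall x, 0 < x <= ga -> A (x, 0).
Proof.
intros HQ Hq1 Hq2 Hbe Hseg.
assert (Hb : 0 < be * q1 / (2 * (- q2))) by (apply Rdiv_lt_0_compat; nra).
exists (Rmin (q1 / 2) (be * q1 / (2 * (- q2)))). split; [apply Rmin_pos; lra|].
intros x Hx.
pose proof (Rmin_l (q1 / 2) (be * q1 / (2 * (- q2)))).
pose proof (Rmin_r (q1 / 2) (be * q1 / (2 * (- q2)))).
set (y := q2 * x / (x - q1)).
assert (Ey : y = (- q2) * x / (q1 - x)) by (unfold y; field; lra).
assert (Hy0 : 0 < y) by (rewrite Ey; apply Rdiv_lt_0_compat; nra).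
assert (Hy1 : y <= be).
{ rewrite Ey. apply Rmult_le_reg_r with (q1 - x); [lra|].
  unfold Rdiv. rewrite Rmult_assoc, Rinv_l, Rmult_1_r by lra.
  assert ((- q2) * x <= be * q1 / 2).
  { apply Rmult_le_reg_r with (/ (- q2)); [apply Rinv_0_lt_compat; lra|].
    replace (- q2 * x * / - q2) with x by (field; lra).
    replace (be * q1 / 2 * / - q2) with (be * q1 / (2 * - q2)) by (field; lra). lra. }
  nra. }
pose proof (meet_x_axis q1 q2 y HQ (Hseg y (conj Hy0 Hy1)) ltac:(lra)) as K.
replace (q1 * y / (y - q2)) with x in K; auto.
unfold y. field. split; [lra|]. intro E. assert (q1 * q2 = 0) by nra. nra.
Qed.

(* The lines through [(x/K, 0), (0, -y/(K-1))] and [(x/(K+1), 0), (0, -y/K)] meet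
   at [(x, y)]; for large [K] all four points lie on the given segments. *)
Lemma off_axes_of_axis_segments al be : 0 < al -> 0 < be ->
  (forall x, 0 < Rabs x <= al -> A (x, 0)) -> (forall y, 0 < Rabs y <= be -> A (0, y)) ->
  forall x y, x <> 0 -> y <> 0 -> A (x, y).
Proof.
intros Hal Hbe HX HY x y Hx Hy.
destruct (INR_archimed 1 (2 + Rabs x / al + Rabs y / be) ltac:(lra)) as [n Hn].
rewrite Rmult_1_r in Hn. set (K := INR n) in *.
assert (Hax : 0 < Rabs x) by (apply Rabs_pos_lt; auto).
assert (Hay : 0 < Rabs y) by (apply Rabs_pos_lt; auto).
assert (Hxa : 0 <= Rabs x / al) by (apply Rlt_le, Rdiv_lt_0_compat; lra).
assert (Hyb : 0 <= Rabs y / be) by (apply Rlt_le, Rdiv_lt_0_compat; lra).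
assert (HK2 : 2 < K) by lra.
assert (Bx : forall M, K <= M -> 0 < Rabs (x / M) <= al).
{ intros M HM0. unfold Rdiv. rewrite Rabs_mult, Rabs_inv, (Rabs_right M) by lra.
  split; [apply Rmult_lt_0_compat; [auto | apply Rinv_0_lt_compat; lra]|].
  apply Rmult_le_reg_r with M; [lra|]. rewrite Rmult_assoc, Rinv_l by lra.
  assert (Rabs x <= al * K).
  { apply Rmult_le_reg_r with (/ al); [apply Rinv_0_lt_compat; lra|].
    replace (al * K * / al) with K by (field; lra). unfold Rdiv in Hxa. lra. }
  nra. }
assert (By : forall M, K - 1 <= M -> 0 < Rabs (- y / M) <= be).
{ intros M HM0. unfold Rdiv. rewrite Rabs_mult, Rabs_inv, Rabs_Ropp, (Rabs_right M) by lra.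
  split; [apply Rmult_lt_0_compat; [auto | apply Rinv_0_lt_compat; lra]|].
  apply Rmult_le_reg_r with M; [lra|]. rewrite Rmult_assoc, Rinv_l by lra.
  assert (Rabs y <= be * (K - 1)).
  { apply Rmult_le_reg_r with (/ be); [apply Rinv_0_lt_compat; lra|].
    replace (be * (K - 1) * / be) with (K - 1) by (field; lra). unfold Rdiv in Hyb. lra. }
  nra. }
apply (meet_closed_at A (x / K) 0 0 (- y / (K - 1)) (x / (K + 1)) 0 0 (- y / K) x y (1 - K) (- K)
         A_meet); [apply HX, Bx; lra | apply HY, By; lra | apply HX, Bx; lra | apply HY, By; lra
                  | | field; lra .. ].
replace ((0 - x / K) * (- y / K - 0) - (- y / (K - 1) - 0) * (0 - x / (K + 1)))
  with (- (x * y) / (K * K * ((K - 1) * (K + 1)))) by (field; repeat split; lra).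
unfold Rdiv. intro E. apply Rmult_integral in E. destruct E as [E|E].
- assert (x * y = 0) by lra. apply Rmult_integral in H. tauto.
- apply Rinv_neq_0_compat in E; auto.
  assert (0 < K * K * ((K - 1) * (K + 1))) by (apply Rmult_lt_0_compat; nra). lra.
Qed.

Lemma full_of_axis_segments al be : 0 < al -> 0 < be ->
  (forall x, 0 < Rabs x <= al -> A (x, 0)) -> (forall y, 0 < Rabs y <= be -> A (0, y)) ->
  forall z, A z.
Proof.
intros Hal Hbe HX HY [x y]. apply A_closed. intros e He.
set (x' := if Req_EM_T x 0 then e / 2 else x).
set (y' := if Req_EM_T y 0 then e / 2 else y).
exists (x', y'). split.
- apply (off_axes_of_axis_segments al be); auto;
    unfold x', y'; destruct (Req_EM_T x 0), (Req_EM_T y 0); lra.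
- unfold dist2, x', y'; cbn [fst snd]. destruct (Req_EM_T x 0), (Req_EM_T y 0); subst; nra.
Qed.

Theorem frame_closed_full a b : A (- a, 0) -> A (0, - b) -> 0 < a -> 0 < b -> a * b <> 1 ->
  forall z, A z.
Proof.
intros Ha' Hb' Ha Hb Hab.
destruct (opposite_quadrant_points a b Ha' Hb' Ha Hb Hab)
  as [p1 [p2 [la [Hp1 [Hp2 [Hla [HP HlaP]]]]]]].
destruct (x_axis_translation p1 p2 la HP HlaP Hp1 Hp2 Hla) as [c [Hc [Tneg Tpos]]].
destruct (half_ratio_points a b c Ha' Hb' Ha Hb Hc Tneg Tpos)
  as [r1 [r2 [q1 [q2 [Hr1 [Hr2 [Hq1 [Hq2 [HR [HQ Hhalf]]]]]]]]]].
destruct (orbit_dense_half_line (fun s => 0 < s /\ A (- / s, 0)) c (1 / 2) ((q2 - r2) / (q1 * r2))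
            Hc ltac:(lra)) with (s0 := / a) as [u [Hu Hdense]].
- intros s [Hs Hy]. split; [lra|]. apply Tneg; auto.
- intros s [Hs Hy]. rewrite <- Hhalf.
  apply (neg_x_axis_step r1 r2 q1 q2 s HR HQ Hr1 Hq1 ltac:(nra) Hs Hy).
- split; [apply Rinv_0_lt_compat; lra|]. rewrite Rinv_inv; auto.
- assert (Hu0 : 0 < u) by (assert (0 < / a) by (apply Rinv_0_lt_compat; lra); lra).
  assert (Hiu : 0 < / u) by (apply Rinv_0_lt_compat; lra).
  pose proof (neg_x_segment u Hu0 Hdense) as NegX.
  destruct (pos_y_segment p1 p2 (/ u) HP Hp1 Hp2 Hiu NegX) as [b1 [Hb1 PosY]].
  destruct (neg_y_segment r1 r2 (/ u) HR Hr1 Hr2 Hiu NegX) as [b2 [Hb2 NegY]].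
  destruct (pos_x_segment r1 r2 b1 HR Hr1 Hr2 Hb1 PosY) as [g1 [Hg1 PosX]].
  apply (full_of_axis_segments (Rmin (/ u) g1) (Rmin b1 b2));
    [apply Rmin_pos; auto | apply Rmin_pos; auto | |].
  + intros x [Hx0 Hx1]. pose proof (Rmin_l (/ u) g1). pose proof (Rmin_r (/ u) g1).
    destruct (Rlt_or_le 0 x).
    * rewrite Rabs_right in Hx1 by lra. apply PosX. lra.
    * assert (x <> 0) by (intro E; subst; rewrite Rabs_R0 in Hx0; lra).
      rewrite Rabs_left in Hx1 by lra. apply NegX. lra.
  + intros y [Hy0 Hy1]. pose proof (Rmin_l b1 b2). pose proof (Rmin_r b1 b2).
    destruct (Rlt_or_le 0 y).
    * rewrite Rabs_right in Hy1 by lra. apply PosY. lra.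
    * assert (y <> 0) by (intro E; subst; rewrite Rabs_R0 in Hy0; lra).
      rewrite Rabs_left in Hy1 by lra. apply NegY. lra.
Qed.

End FrameClosed.

Lemma affine_coords w1 w2 u1 u2 v1 v2 z1 z2 :
  affine (w1, w2) (u1, u2) (v1, v2) (z1, z2) = (w1 + z1 * u1 + z2 * v1, w2 + z1 * u2 + z2 * v2).
Proof. reflexivity. Qed.

(* [W + la (X - W)] and [W + mu (Y - W)] are the points [(la, 0)] and [(0, mu)] in the
   frame [(W; X, Y)]. *)
Lemma dense_of_frame S W X Y la mu : meet_closed S -> S W -> S X -> S Y ->
  S (padd W (pscale la (psub X W))) -> S (padd W (pscale mu (psub Y W))) ->
  la < 0 -> mu < 0 -> cross (psub X W) (psub Y W) <> 0 -> la * mu <> 1 -> dense S.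
Proof.
intros HM HW HX HY Hla Hmu Hla0 Hmu0 Huv Hlm.
apply (dense_of_affine S W (psub X W) (psub Y W) Huv).
set (S' := fun z => S (affine W (psub X W) (psub Y W) z)).
destruct W as [w1 w2], X as [x1 x2], Y as [y1 y2].
assert (HS' : forall z1 z2 p1 p2, p1 = w1 + z1 * (x1 - w1) + z2 * (y1 - w1) ->
          p2 = w2 + z1 * (x2 - w2) + z2 * (y2 - w2) -> S (p1, p2) -> adherent S' (z1, z2))
  by (intros z1 z2 p1 p2 E1 E2 Hp; apply adherent_of; unfold S'; rewrite E1, E2 in Hp; exact Hp).
unfold psub, padd, pscale in *; simpl in *.
intro z.
apply (frame_closed_full (adherent S') (meet_closed_adherent _ (meet_closed_affine _ _ _ _ HM Huv))
         (closed_set_adherent _)) with (a := - la) (b := - mu); try lra.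
- apply (HS' 0 0 w1 w2); [ring | ring | exact HW].
- apply (HS' 1 0 x1 x2); [ring | ring | exact HX].
- apply (HS' 0 1 y1 y2); [ring | ring | exact HY].
- rewrite Ropp_involutive.
  apply (HS' la 0 (w1 + la * (x1 - w1)) (w2 + la * (x2 - w2))); [ring | ring | exact Hla].
- rewrite Ropp_involutive.
  apply (HS' 0 mu (w1 + mu * (y1 - w1)) (w2 + mu * (y2 - w2))); [ring | ring | exact Hmu].
Qed.

Definition unit_frame_dense (s t : R) : Prop :=
  forall S, meet_closed S -> S (0, 0) -> S (1, 0) -> S (0, 1) -> S (s, t) -> dense S.

Lemma unit_frame_dense_affine W u v s t s' t' : cross u v <> 0 ->
  (forall p, In p [(0, 0); (1, 0); (0, 1)] -> In (affine W u v p) [(0, 0); (1, 0); (0, 1)]) ->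
  affine W u v (s', t') = (s, t) -> unit_frame_dense s' t' -> unit_frame_dense s t.
Proof.
intros Huv Hframe Hst H S HM HO HA HB HD.
assert (HF : forall p, In p [(0, 0); (1, 0); (0, 1)] -> S (affine W u v p)).
{ intros p Hp. destruct (Hframe p Hp) as [E|[E|[E|[]]]]; rewrite <- E; assumption. }
apply (dense_of_affine S W u v Huv), H.
- apply meet_closed_affine; assumption.
- apply HF; simpl; tauto.
- apply HF; simpl; tauto.
- apply HF; simpl; tauto.
- simpl. rewrite Hst. exact HD.
Qed.

Lemma unit_frame_dense_swap s t : unit_frame_dense t s -> unit_frame_dense s t.
Proof.
apply (unit_frame_dense_affine (0, 0) (0, 1) (1, 0)).
- unfold cross; simpl; lra.
- intros p [E|[E|[E|[]]]]; subst; unfold affine; simpl;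
    [left | right; right; left | right; left]; f_equal; ring.
- rewrite affine_coords. f_equal; ring.
Qed.

Lemma unit_frame_dense_reflect s t : unit_frame_dense (1 - s - t) t -> unit_frame_dense s t.
Proof.
apply (unit_frame_dense_affine (1, 0) (-1, 0) (-1, 1)).
- unfold cross; simpl; lra.
- intros p [E|[E|[E|[]]]]; subst; unfold affine; simpl;
    [right; left | left | right; right; left]; f_equal; ring.
- rewrite affine_coords. f_equal; ring.
Qed.

Section UnitFrame.

Variables (S : pt -> Prop) (s t : R).
Hypotheses (S_meet : meet_closed S) (S_O : S (0, 0)) (S_e1 : S (1, 0)) (S_e2 : S (0, 1)).
Hypothesis S_D : S (s, t).

Lemma unit_frame_diag_point : s + t <> 0 -> S (s / (s + t), t / (s + t)).
Proof.
intro Hst.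
apply (meet_closed_at S 0 0 s t 1 0 0 1 _ _ (1 / (s + t)) (t / (s + t)) S_meet S_O S_D S_e1 S_e2);
  [| field; auto .. ].
replace ((s - 0) * (1 - 0) - (t - 0) * (0 - 1)) with (s + t) by ring. auto.
Qed.

Lemma unit_frame_y_point : s <> 1 -> S (0, t / (1 - s)).
Proof.
intro Hs.
apply (meet_closed_at S 1 0 s t 0 0 0 1 _ _ (1 / (1 - s)) (t / (1 - s)) S_meet S_e1 S_D S_O S_e2);
  [| field; lra .. ].
replace ((s - 1) * (1 - 0) - (t - 0) * (0 - 0)) with (s - 1) by ring. lra.
Qed.

Lemma unit_frame_x_point : t <> 1 -> S (s / (1 - t), 0).
Proof.
intro Ht.
apply (meet_closed_at S 0 1 s t 0 0 1 0 _ _ (1 / (1 - t)) (s / (1 - t)) S_meet S_e2 S_D S_O S_e1);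
  [| field; lra .. ].
replace ((s - 0) * (0 - 0) - (t - 1) * (1 - 0)) with (1 - t) by ring. lra.
Qed.

End UnitFrame.

Lemma Rdiv_mult_neq_1 x y z w : y <> 0 -> w <> 0 -> x * z <> y * w -> x / y * (z / w) <> 1.
Proof.
intros Hy Hw H E. apply H.
replace (x * z) with (x / y * (z / w) * (y * w)) by (field; auto). rewrite E. ring.
Qed.

Ltac frame_point H :=
  refine (eq_ind _ _ H _ _); unfold padd, pscale, psub; simpl; f_equal; field.

Lemma unit_frame_dense_neg_neg s t : s < 0 -> t < 0 -> unit_frame_dense s t.
Proof.
intros Hs Ht S HM HO HA HB HD.
apply (dense_of_frame S (0, 0) (1, 0) (0, 1) (s / (1 - t)) (t / (1 - s)) HM HO HA HB).
- frame_point (unit_frame_x_point S s t HM HO HA HB HD ltac:(lra)); lra.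
- frame_point (unit_frame_y_point S s t HM HO HA HB HD ltac:(lra)); lra.
- apply Rdiv_neg_pos; lra.
- apply Rdiv_neg_pos; lra.
- unfold cross, psub; simpl; lra.
- apply Rdiv_mult_neq_1; lra.
Qed.

Lemma unit_frame_dense_neg_pos s t : s < 0 -> 0 < t -> s + t < 1 -> s + t <> 0 ->
  unit_frame_dense s t.
Proof.
intros Hs Ht Hr Hst S HM HO HA HB HD.
apply (dense_of_frame S (0, t / (1 - s)) (0, 0) (1, 0) (- (1 - s - t) / t) s HM
         (unit_frame_y_point S s t HM HO HA HB HD ltac:(lra)) HO HA).
- frame_point HB; lra.
- frame_point HD; lra.
- apply Rdiv_neg_pos; lra.
- exact Hs.
- unfold cross, psub; simpl. replace ((0 - 0) * (0 - t / (1 - s)) - (0 - t / (1 - s)) * (1 - 0))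
    with (t / (1 - s)) by ring. apply Rgt_not_eq, Rdiv_lt_0_compat; lra.
- replace (- (1 - s - t) / t * s) with (- (1 - s - t) * s / t) by (field; lra).
  intro E. apply (f_equal (fun q => q * t)) in E.
  replace (- (1 - s - t) * s / t * t) with (- (1 - s - t) * s) in E by (field; lra).
  assert (E2 : (s - 1) * (s + t) = 0) by lra.
  apply Rmult_integral in E2. destruct E2; lra.
Qed.

Lemma unit_frame_dense_pos s t : 0 < s -> 0 < t -> s + t < 1 -> unit_frame_dense s t.
Proof.
intros Hs Ht Hr S HM HO HA HB HD.
apply (dense_of_frame S (s, t) (0, 0) (1, 0) (- (1 - s - t) / (s + t)) (- s / (1 - s)) HM HD HO HA).
- frame_point (unit_frame_diag_point S s t HM HO HA HB HD ltac:(lra)); lra.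
- frame_point (unit_frame_y_point S s t HM HO HA HB HD ltac:(lra)); lra.
- apply Rdiv_neg_pos; lra.
- apply Rdiv_neg_pos; lra.
- unfold cross, psub; simpl. lra.
- apply Rdiv_mult_neq_1; lra.
Qed.

Lemma unit_frame_dense_nondegenerate s t : s <> 0 -> t <> 0 -> s + t <> 1 ->
  s <> 1 -> t <> 1 -> s + t <> 0 -> unit_frame_dense s t.
Proof.
intros Hs Ht Hr Hs1 Ht1 Hst.
destruct (Rlt_or_le s 0), (Rlt_or_le t 0), (Rlt_or_le (s + t) 1).
- apply unit_frame_dense_neg_neg; lra.
- exfalso; lra.
- apply unit_frame_dense_neg_pos; lra.
- apply unit_frame_dense_swap, unit_frame_dense_reflect, unit_frame_dense_neg_neg; lra.
- apply unit_frame_dense_swap, unit_frame_dense_neg_pos; lra.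
- apply unit_frame_dense_reflect, unit_frame_dense_neg_neg; lra.
- apply unit_frame_dense_pos; lra.
- apply unit_frame_dense_reflect, unit_frame_dense_neg_pos; lra.
Qed.

(* In the frame [(c1; c2, c3)] the point [c4] has coordinates [(s, t)]; each of the six
   general-position conditions rules out one degenerate value of [s], [t] or [s + t]. *)
Theorem meet_closed_dense S c1 c2 c3 c4 : meet_closed S -> S c1 -> S c2 -> S c3 -> S c4 ->
  general_position c1 c2 c3 c4 -> dense S.
Proof.
intros HM H1 H2 H3 H4 [G1 [G2 [G3 [G4 [G5 [G6 G7]]]]]].
destruct c1 as [a1 a2], c2 as [b1 b2], c3 as [e1 e2], c4 as [f1 f2].
unfold collinear, parallel, line_through, cross, psub in *; simpl in *.
set (c := (b1 - a1) * (e2 - a2) - (b2 - a2) * (e1 - a1)) in *.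
set (u := (b1 - a1, b2 - a2)). set (v := (e1 - a1, e2 - a2)).
assert (Huv : cross u v <> 0) by exact G1.
set (s := ((f1 - a1) * (e2 - a2) - (f2 - a2) * (e1 - a1)) / c).
set (t := ((b1 - a1) * (f2 - a2) - (b2 - a2) * (f1 - a1)) / c).
apply (dense_of_affine S (a1, a2) u v Huv).
apply (unit_frame_dense_nondegenerate s t); try apply meet_closed_affine; auto;
  unfold affine, u, v; simpl.
- intro E. apply G3. replace ((e1 - a1) * (f2 - a2) - (e2 - a2) * (f1 - a1)) with (- s * c)
    by (unfold s; field; exact G1). rewrite E. ring.
- intro E. apply G2. replace ((b1 - a1) * (f2 - a2) - (b2 - a2) * (f1 - a1)) with (t * c)
    by (unfold t; field; exact G1). rewrite E. ring.
- intro E. apply G4.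
  replace ((e1 - b1) * (f2 - b2) - (e2 - b2) * (f1 - b1)) with (- (s + t - 1) * c)
    by (unfold s, t, c; field; exact G1). rewrite E. ring.
- intro E. apply G6. replace ((e1 - a1) * (f2 - b2) - (e2 - a2) * (f1 - b1)) with (- (s - 1) * c)
    by (unfold s, t, c; field; exact G1). rewrite E. ring.
- intro E. apply G5. replace ((b1 - a1) * (f2 - e2) - (b2 - a2) * (f1 - e1)) with ((t - 1) * c)
    by (unfold s, t, c; field; exact G1). rewrite E. ring.
- intro E. apply G7. replace ((f1 - a1) * (e2 - b2) - (f2 - a2) * (e1 - b1)) with ((s + t) * c)
    by (unfold s, t, c; field; exact G1). rewrite E. ring.
- replace (a1 + 0 * (b1 - a1) + 0 * (e1 - a1), a2 + 0 * (b2 - a2) + 0 * (e2 - a2))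
    with (a1, a2) by (f_equal; ring). exact H1.
- replace (a1 + 1 * (b1 - a1) + 0 * (e1 - a1), a2 + 1 * (b2 - a2) + 0 * (e2 - a2))
    with (b1, b2) by (f_equal; ring). exact H2.
- replace (a1 + 0 * (b1 - a1) + 1 * (e1 - a1), a2 + 0 * (b2 - a2) + 1 * (e2 - a2))
    with (e1, e2) by (f_equal; ring). exact H3.
- replace (a1 + s * (b1 - a1) + t * (e1 - a1), a2 + s * (b2 - a2) + t * (e2 - a2)) with (f1, f2)
    by (unfold s, t, c; f_equal; field; exact G1). exact H4.
Qed.

Definition stable_near (P : pt -> pt -> pt -> pt -> Prop) (c1 c2 c3 c4 : pt) : Prop :=
  exists d, 0 < d /\ forall c1' c2' c3' c4',
    close d c1 c1' -> close d c2 c2' -> close d c3 c3' -> close d c4 c4' -> P c1' c2' c3' c4'.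

Lemma stable_near_and P Q c1 c2 c3 c4 : stable_near P c1 c2 c3 c4 -> stable_near Q c1 c2 c3 c4 ->
  stable_near (fun a b c d => P a b c d /\ Q a b c d) c1 c2 c3 c4.
Proof.
intros [d1 [Hd1 K1]] [d2 [Hd2 K2]]. exists (Rmin d1 d2). split; [apply Rmin_pos; auto|].
pose proof (Rmin_l d1 d2). pose proof (Rmin_r d1 d2).
intros; split; [apply K1 | apply K2]; eapply close_mono; eauto.
Qed.

Lemma general_position_stable c1 c2 c3 c4 : general_position c1 c2 c3 c4 ->
  stable_near general_position c1 c2 c3 c4.
Proof.
intros [G1 [G2 [G3 [G4 [G5 [G6 G7]]]]]].
change (meet_det c1 c2 c1 c3 <> 0) in G1. change (meet_det c1 c2 c1 c4 <> 0) in G2.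
change (meet_det c1 c3 c1 c4 <> 0) in G3. change (meet_det c2 c3 c2 c4 <> 0) in G4.
change (meet_det c1 c2 c3 c4 <> 0) in G5. change (meet_det c1 c3 c2 c4 <> 0) in G6.
change (meet_det c1 c4 c2 c3 <> 0) in G7.
unfold general_position. repeat apply stable_near_and.
all: match goal with
     | G : meet_det _ _ _ _ <> 0 |- _ =>
         destruct (meet_det_stable _ _ _ _ G) as [e [He K]];
         exists e; split; [exact He|]; intros; apply K; assumption
     end.
Qed.

Lemma dense_general_position (Sg : pt -> Prop) : dense Sg ->
  exists c1 c2 c3 c4, Sg c1 /\ Sg c2 /\ Sg c3 /\ Sg c4 /\ general_position c1 c2 c3 c4.
Proof.
intro HD.
destruct (general_position_stable (0, 0) (1, 0) (0, 1) (2, 3)) as [d [Hd K]].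
{ unfold general_position, collinear, parallel, line_through, cross, psub; simpl.
  repeat split; lra. }
destruct (dense_close Sg (0, 0) d HD Hd) as [c1 [S1 C1]].
destruct (dense_close Sg (1, 0) d HD Hd) as [c2 [S2 C2]].
destruct (dense_close Sg (0, 1) d HD Hd) as [c3 [S3 C3]].
destruct (dense_close Sg (2, 3) d HD Hd) as [c4 [S4 C4]].
exists c1, c2, c3, c4. auto 6.
Qed.

Lemma norm2_pos (d : pt) : d <> (0, 0) -> 0 < fst d * fst d + snd d * snd d.
Proof.
destruct d as [d1 d2]; simpl; intro Hd.
destruct (Req_dec d1 0); [destruct (Req_dec d2 0)|]; subst.
- contradiction.
- assert (0 < d2 * d2) by nra. nra.
- assert (0 < d1 * d1) by nra. nra.
Qed.

Lemma parallel_scale (d e : pt) : d <> (0, 0) -> cross e d = 0 -> exists la, e = pscale la d.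
Proof.
intros Hd He. pose proof (norm2_pos d Hd) as HN.
destruct d as [d1 d2], e as [e1 e2]; unfold cross, pscale in *; simpl in *.
exists ((e1 * d1 + e2 * d2) / (d1 * d1 + d2 * d2)).
f_equal; apply (Rmult_eq_reg_r (d1 * d1 + d2 * d2)); try lra.
- replace ((e1 * d1 + e2 * d2) / (d1 * d1 + d2 * d2) * d1 * (d1 * d1 + d2 * d2))
    with ((e1 * d1 + e2 * d2) * d1) by (field; lra).
  replace (e1 * (d1 * d1 + d2 * d2)) with ((e1 * d1 + e2 * d2) * d1 + d2 * (e1 * d2 - e2 * d1))
    by ring. rewrite He. ring.
- replace ((e1 * d1 + e2 * d2) / (d1 * d1 + d2 * d2) * d2 * (d1 * d1 + d2 * d2))
    with ((e1 * d1 + e2 * d2) * d2) by (field; lra).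
  replace (e2 * (d1 * d1 + d2 * d2)) with ((e1 * d1 + e2 * d2) * d2 - d1 * (e1 * d2 - e2 * d1))
    by ring. rewrite He. ring.
Qed.

(* Parallel lines sharing a point coincide, so their common points are never isolated. *)
Lemma parallel_not_isolated l b1 b2 p : is_line l -> b1 <> b2 ->
  parallel (line_through b1 b2) l -> ~ isolated_inter (line_through b1 b2) (on_line l) p.
Proof.
intros Hl Hb Hpar [[t0 Ht0] [[s0 Hs0] [eps [Heps Hiso]]]].
destruct (parallel_scale (snd l) (psub b2 b1) Hl Hpar) as [la Hla].
assert (He : psub b2 b1 <> (0, 0)).
{ intro E. apply Hb. destruct b1, b2; unfold psub in E; injection E; intros.
  f_equal; lra. }
pose proof (norm2_pos _ He) as HN.
set (N := fst (psub b2 b1) * fst (psub b2 b1) + snd (psub b2 b1) * snd (psub b2 b1)) in *.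
set (h := eps / (N + 1)).
assert (Hh : 0 < h) by (unfold h; apply Rdiv_lt_0_compat; lra).
assert (Hh2 : h * h * N < eps ^ 2).
{ unfold h. replace (eps / (N + 1) * (eps / (N + 1)) * N) with (eps ^ 2 * (N / ((N + 1) * (N + 1))))
    by (field; lra).
  assert (N / ((N + 1) * (N + 1)) < 1)
    by (apply Rmult_lt_reg_r with ((N + 1) * (N + 1)); [nra|];
        unfold Rdiv; rewrite Rmult_assoc, Rinv_l by nra; nra).
  assert (0 < eps ^ 2) by (apply pow_lt; lra). nra. }
destruct l as [P d], b1 as [x1 y1], b2 as [x2 y2], p as [q1 q2], P as [P1 P2], d as [d1 d2].
unfold line_through, on_line, padd, pscale, psub, dist2 in *; simpl in *.
injection Hla; injection Ht0; injection Hs0; intros F1 F2 F3 F4 L1 L2.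
assert (K : (q1 + h * (x2 - x1), q2 + h * (y2 - y1)) = (q1, q2)).
{ apply Hiso.
  - exists (t0 + h). f_equal; rewrite ?F4, ?F3; ring.
  - exists (s0 + h * la). rewrite F2, F1. f_equal; nra.
  - unfold N in Hh2. simpl. nra. }
injection K; intros K1 K2.
assert (h * (x2 - x1) = 0) by lra. assert (h * (y2 - y1) = 0) by lra.
apply Rmult_integral in H. apply Rmult_integral in H0. unfold N in HN. nra.
Qed.

Lemma on_line_two_points l m1 m2 : on_line l m1 -> on_line l m2 -> m1 <> m2 ->
  (forall x, on_line l x <-> on_line (line_through m1 m2) x) /\
  exists mu, mu <> 0 /\ psub m2 m1 = pscale mu (snd l).
Proof.
destruct l as [[p1 p2] [d1 d2]].
unfold on_line, line_through, padd, pscale, psub; simpl.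
intros [s1 E1] [s2 E2] Hm. subst m1 m2.
assert (Hs : s1 <> s2) by (intro E; subst; apply Hm; reflexivity).
split.
- intros [x1 x2]. split.
  + intros [t Ht]. exists ((t - s1) / (s2 - s1)). injection Ht; intros; subst.
    simpl; f_equal; field; lra.
  + intros [t Ht]. exists (s1 + t * (s2 - s1)). injection Ht; intros; subst. simpl; f_equal; ring.
- exists (s2 - s1). split; [lra|]. simpl; f_equal; ring.
Qed.

Definition spanned (Sg : pt -> Prop) (l : line) : Prop :=
  exists m1 m2, Sg m1 /\ Sg m2 /\ m1 <> m2 /\ on_line l m1 /\ on_line l m2.

Lemma close_common_point e p q m : close e p m -> close e q m ->
  Rabs (fst q - fst p) + Rabs (snd q - snd p) < 4 * e.
Proof.
unfold close. intros [A1 A2] [B1 B2].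
apply Rabs_def2 in A1, A2, B1, B2.
assert (Rabs (fst q - fst p) < 2 * e) by (apply Rabs_def1; lra).
assert (Rabs (snd q - snd p) < 2 * e) by (apply Rabs_def1; lra).
lra.
Qed.

Lemma isolated_meet l u v P Q : meet_det u v P Q <> 0 ->
  (forall x, on_line l x <-> on_line (line_through P Q) x) ->
  isolated_inter (line_through u v) (on_line l) (meet u v P Q).
Proof.
intros HD Hl. split; [apply on_line_meet_l|]. split; [apply Hl, on_line_meet_r; auto|].
exists 1. split; [lra|]. intros q Hq1 Hq2 _. apply meet_unique; auto. apply Hl; auto.
Qed.

(* Perturbing [U] and [V] into [Sg] moves the intersection with [l] only slightly, and
   it stays an isolated intersection point, hence a point of [Sg]. *)
Lemma admissible_meet_near C Sg l U V P Q e : admissible C Sg -> In l (clines C) ->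
  (forall x, on_line l x <-> on_line (line_through P Q) x) -> meet_det U V P Q <> 0 -> 0 < e ->
  exists m, Sg m /\ on_line l m /\ close e (meet U V P Q) m.
Proof.
intros [HD [_ [_ Hcurve]]] Hl Lq HUV He.
destruct (meet_continuous U V P Q HUV e He) as [d [Hd K]].
destruct (dense_close Sg U d HD Hd) as [u [Su Cu]].
destruct (dense_close Sg V d HD Hd) as [v [Sv Cv]].
destruct (K u v P Q Cu Cv (close_refl d P Hd) (close_refl d Q Hd)) as [Huv C1].
exists (meet u v P Q). split; [|split; [apply Lq, on_line_meet_r; auto | exact C1]].
apply (Hcurve u v); [auto | auto | eapply meet_det_neq_l; eauto|].
left. exists l. split; [exact Hl | apply isolated_meet; auto].
Qed.

(* The lines through [P0 + n] and [P0 - n], resp. [P0 + d - n], with [n] normal to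
   [l = (P0, d)], cut [l] at [P0], resp. at its midpoint [P0 + d/2]. *)
Lemma admissible_line_spanned C Sg l : admissible C Sg -> In l (clines C) -> is_line l ->
  spanned Sg l.
Proof.
intros Adm Hl Hil. pose proof (norm2_pos _ Hil) as HN.
destruct l as [[p1 p2] [d1 d2]]; simpl in HN.
set (P0 := (p1, p2) : pt). set (Pd := (p1 + d1, p2 + d2) : pt).
assert (Lq : forall x, on_line (P0, (d1, d2)) x <-> on_line (line_through P0 Pd) x).
{ apply on_line_two_points.
  - exists 0. unfold padd, pscale, P0; simpl. f_equal; ring.
  - exists 1. unfold padd, pscale, Pd; simpl. f_equal; ring.
  - intro E. injection E; intros. apply Hil. simpl. f_equal; lra. }
set (U := (p1 - d2, p2 + d1) : pt). set (V1 := (p1 + d2, p2 - d1) : pt).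
set (V2 := (p1 + d1 + d2, p2 + d2 - d1) : pt).
assert (D1 : meet_det U V1 P0 Pd <> 0) by (unfold meet_det, cross, psub, U, V1, P0, Pd; simpl; nra).
assert (D2 : meet_det U V2 P0 Pd <> 0) by (unfold meet_det, cross, psub, U, V2, P0, Pd; simpl; nra).
assert (M1e : meet U V1 P0 Pd = (p1, p2)).
{ unfold meet, meet_det, cross, padd, pscale, psub, U, V1, P0, Pd; simpl. f_equal; field; nra. }
assert (M2e : meet U V2 P0 Pd = (p1 + d1 / 2, p2 + d2 / 2)).
{ unfold meet, meet_det, cross, padd, pscale, psub, U, V2, P0, Pd; simpl. f_equal; field; nra. }
set (e := (Rabs d1 + Rabs d2) / 8).
assert (He : 0 < e).
{ unfold e. destruct (Req_dec d1 0) as [Z|Z].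
  - assert (d2 <> 0) by (intro; subst; lra).
    pose proof (Rabs_pos_lt d2 H). pose proof (Rabs_pos d1). lra.
  - pose proof (Rabs_pos_lt d1 Z). pose proof (Rabs_pos d2). lra. }
destruct (admissible_meet_near C Sg _ U V1 P0 Pd e Adm Hl Lq D1 He) as [m1 [S1 [O1 C1]]].
destruct (admissible_meet_near C Sg _ U V2 P0 Pd e Adm Hl Lq D2 He) as [m2 [S2 [O2 C2]]].
exists m1, m2. repeat split; auto.
intro E. rewrite M1e in C1. rewrite <- E, M2e in C2.
pose proof (close_common_point _ _ _ _ C1 C2) as K. simpl in K.
replace (p1 + d1 / 2 - p1) with (d1 * / 2) in K by field.
replace (p2 + d2 / 2 - p2) with (d2 * / 2) in K by field.
rewrite !Rabs_mult, (Rabs_right (/ 2)) in K by lra. unfold e in K. lra.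
Qed.

Lemma spanned_line_through Sg b1 b2 : Sg b1 -> Sg b2 -> b1 <> b2 -> spanned Sg (line_through b1 b2).
Proof.
intros. exists b1, b2. repeat split; auto.
- exists 0. destruct b1; unfold padd, pscale; simpl. f_equal; ring.
- exists 1. destruct b1, b2; unfold padd, pscale, psub; simpl. f_equal; ring.
Qed.

Lemma not_parallel_rescale l1 l2 u1 u2 mu1 mu2 : mu1 <> 0 -> mu2 <> 0 ->
  u1 = pscale mu1 (snd l1) -> u2 = pscale mu2 (snd l2) -> ~ parallel l1 l2 -> cross u1 u2 <> 0.
Proof.
intros H1 H2 E1 E2 NP P. apply NP. subst. destruct l1 as [x1 [d1 d2]], l2 as [x2 [e1 e2]].
unfold parallel, cross, pscale in *; simpl in *.
assert (E : mu1 * mu2 * (d1 * e2 - d2 * e1) = 0) by (rewrite <- P; ring).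
apply Rmult_integral in E. destruct E as [E|E]; auto.
apply Rmult_integral in E. destruct E; contradiction.
Qed.

Lemma isolated_inter_same_line l l' g x : (forall y, on_line l y <-> on_line l' y) ->
  isolated_inter l g x -> isolated_inter l' g x.
Proof.
intros H [H1 [H2 [eps [He H3]]]]. split; [apply H; auto|]. split; auto.
exists eps. split; auto. intros q Hq1 Hq2 Hq3. apply H3; auto. apply H; auto.
Qed.

Section Admissible.

Variables (C : config) (Sg : pt -> Prop).
Hypothesis Sg_adm : admissible C Sg.

Lemma admissible_meet_spanned l1 l2 x : spanned Sg l1 -> spanned Sg l2 -> ~ parallel l1 l2 ->
  on_line l1 x -> on_line l2 x -> Sg x.
Proof.
intros [m1 [m2 [S1 [S2 [N12 [O1 O2]]]]]] [m3 [m4 [S3 [S4 [N34 [O3 O4]]]]]] NP L1 L2.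
destruct (on_line_two_points _ _ _ O1 O2 N12) as [E12 [mu1 [Hmu1 Emu1]]].
destruct (on_line_two_points _ _ _ O3 O4 N34) as [E34 [mu2 [Hmu2 Emu2]]].
apply (proj1 (proj2 (proj2 Sg_adm)) m1 m2 m3 m4 x); auto.
- exact (not_parallel_rescale l1 l2 _ _ mu1 mu2 Hmu1 Hmu2 Emu1 Emu2 NP).
- apply E12; auto.
- apply E34; auto.
Qed.

Lemma admissible_curve_spanned l g x : spanned Sg l -> In g (ccurves C) -> isolated_inter l g x ->
  Sg x.
Proof.
intros [m1 [m2 [S1 [S2 [N12 [O1 O2]]]]]] Hg Hiso.
destruct (on_line_two_points _ _ _ O1 O2 N12) as [E12 _].
apply (proj2 (proj2 (proj2 Sg_adm)) m1 m2 x); auto.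
right. exists g. split; auto. eapply isolated_inter_same_line; eauto.
Qed.

End Admissible.

Definition extend_lines (Sk : pt -> Prop) (Lk : line -> Prop) (l : line) : Prop :=
  Lk l \/ exists b1 b2, Sk b1 /\ Sk b2 /\ b1 <> b2 /\ l = line_through b1 b2.

Section Algorithm.

Variables (C : config) (c1 c2 c3 c4 : pt).

Local Notation points k := (fst (stage C c1 c2 c3 c4 k)).
Local Notation lines k := (snd (stage C c1 c2 c3 c4 k)).

Lemma stage_lines_succ k l : lines (S k) l <-> extend_lines (points k) (lines k) l.
Proof. simpl. destruct (stage C c1 c2 c3 c4 k). reflexivity. Qed.

Lemma stage_points_succ k x : points (S k) x <->
  points k x
  \/ (exists l1 l2, extend_lines (points k) (lines k) l1 /\ extend_lines (points k) (lines k) l2 /\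
        ~ parallel l1 l2 /\ on_line l1 x /\ on_line l2 x)
  \/ (exists l g, extend_lines (points k) (lines k) l /\ In g (ccurves C) /\ isolated_inter l g x).
Proof. simpl. destruct (stage C c1 c2 c3 c4 k). reflexivity. Qed.

Lemma stage_mono k m : (k <= m)%nat ->
  (forall x, points k x -> points m x) /\ (forall l, lines k l -> lines m l).
Proof.
intro H. induction H as [|m H [IH1 IH2]]; [split; auto|].
split; intros.
- apply stage_points_succ. left. auto.
- apply stage_lines_succ. left. auto.
Qed.

Lemma stage_points_up k m x : (k <= m)%nat -> points k x -> points m x.
Proof. intro H. apply (stage_mono k m H). Qed.



Lemma stages_in_admissible Sg : admissible C Sg -> Forall is_line (clines C) ->
  Sg c1 -> Sg c2 -> Sg c3 -> Sg c4 -> forall k,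
  (forall x, points k x -> Sg x) /\ (forall l, lines k l -> spanned Sg l).
Proof.
intros Adm HL H1 H2 H3 H4 k. rewrite Forall_forall in HL.
induction k as [|k [IHp IHl]].
- split.
  + intros x [Hx|[Hx|[Hx|[Hx|Hx]]]]; subst; auto. apply Adm; auto.
  + intros l Hl. apply (admissible_line_spanned C); auto.
- assert (Ext : forall l, extend_lines (points k) (lines k) l -> spanned Sg l).
  { intros l [Hl | [b1 [b2 [Hb1 [Hb2 [Hne El]]]]]]; auto. subst. apply spanned_line_through; auto. }
  split.
  + intros x Hx. apply stage_points_succ in Hx.
    destruct Hx as [Hx | [[l1 [l2 [Hl1 [Hl2 [NP [O1 O2]]]]]] | [l [g [Hl [Hg Hiso]]]]]]; auto.
    * apply (admissible_meet_spanned C Sg Adm l1 l2); auto.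
    * apply (admissible_curve_spanned C Sg Adm l g); auto.
  + intros l Hl. apply stage_lines_succ in Hl. auto.
Qed.

Lemma stages_meet_closed : meet_closed (fun x => exists k, points k x).
Proof.
intros b1 b2 b3 b4 p [k1 H1] [k2 H2] [k3 H3] [k4 H4] N12 N34 NP L1 L2.
set (K := Nat.max (Nat.max k1 k2) (Nat.max k3 k4)).
exists (S K). apply stage_points_succ. right. left.
exists (line_through b1 b2), (line_through b3 b4). repeat split; auto; right.
- exists b1, b2. repeat split; auto;
    [apply (stage_points_up k1) | apply (stage_points_up k2)];
    auto; unfold K; lia.
- exists b3, b4. repeat split; auto;
    [apply (stage_points_up k3) | apply (stage_points_up k4)];
    auto; unfold K; lia.
Qed.

Lemma stages_admissible : Forall is_line (clines C) -> general_position c1 c2 c3 c4 ->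
  admissible C (fun x => exists k, points k x).
Proof.
intros HL Hgp. rewrite Forall_forall in HL.
split; [|split; [|split]].
- apply (meet_closed_dense _ c1 c2 c3 c4 stages_meet_closed); auto;
    exists 0%nat; simpl; auto.
- intros a Ha. exists 0%nat. simpl. auto.
- exact stages_meet_closed.
- intros b1 b2 p [k1 H1] [k2 H2] N12 Hiso.
  set (K := Nat.max k1 k2).
  assert (G1 : points K b1) by (apply (stage_points_up k1); auto; unfold K; lia).
  assert (G2 : points K b2) by (apply (stage_points_up k2); auto; unfold K; lia).
  exists (S K). apply stage_points_succ. right.
  destruct Hiso as [[l [Hl Hiso]] | [g [Hg Hiso]]].
  + left. destruct (Req_dec (cross (psub b2 b1) (snd l)) 0) as [Hp|Hp].
    * exfalso. apply (parallel_not_isolated l b1 b2 p); auto.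
    * exists (line_through b1 b2), l. destruct Hiso as [Hon [Hon2 _]].
      repeat split; auto.
      -- right. exists b1, b2. auto.
      -- left. apply (stage_mono 0 K); [lia|]. simpl. auto.
  + right. exists (line_through b1 b2), g. split; [|split; [exact Hg | exact Hiso]].
    right. exists b1, b2. auto.
Qed.

End Algorithm.

Theorem mainTheorem12 (C : config) (a : pt) :
  Forall is_line (clines C) ->
  (non_constructible C a /\
     ~ (forall c1 c2 c3 c4 : pt, general_position c1 c2 c3 c4 ->
          algorithm_constructs C c1 c2 c3 c4 a))
  \/
  (~ non_constructible C a /\
     (forall c1 c2 c3 c4 : pt, general_position c1 c2 c3 c4 ->
          algorithm_constructs C c1 c2 c3 c4 a)).
Proof.
intro HL. destruct (classic (non_constructible C a)) as [NC|NNC].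
- left. split; auto. intro Hall. destruct NC as [Sg [Adm Na]].
  destruct (dense_general_position Sg (proj1 Adm))
    as [c1 [c2 [c3 [c4 [S1 [S2 [S3 [S4 Hgp]]]]]]]].
  destruct (Hall c1 c2 c3 c4 Hgp) as [k Hk].
  apply Na, (stages_in_admissible C c1 c2 c3 c4 Sg Adm HL S1 S2 S3 S4 k), Hk.
- right. split; auto. intros c1 c2 c3 c4 Hgp.
  apply NNPP. intro Hn. apply NNC.
  exists (fun x => exists k, fst (stage C c1 c2 c3 c4 k) x).
  split; [apply stages_admissible; auto | exact Hn].
Qed.
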